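(* Let $p>2$, let $I\subset\mathbb{R}$ be an interval and let $f\in C^\infty_c(\mathbb{R}^2)$. Then $$\sum_{J\in\mathcal D}|J|^{-\frac p{20}}\|f\mathbf 1_{I\times J}\|^p_{L^{20/11}_{x,y}}\lesssim_p\|f\mathbf 1_{I\times\mathbb{R}}\|^p_{L^{20/11}_xL^2_y},$$ where $\|h\|_{L^{20/11}_xL^2_y}=\big(\int_{\mathbb{R}}\|h(x,\cdot)\|_{L^2(\mathbb{R})}^{20/11}dx\big)^{11/20}$, and the implicit constant depends only on $p$.
   Context: $\mathcal D$ denotes the collection of dyadic intervals $\{[2^k(n-1),2^k(n+1)]:k,n\in\mathbb{Z}\}$, and $|J|$ is the length of $J$. *)

From Stdlib Require Import Reals Lra ZArith List ClassicalEpsilon.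
Open Scope R_scope.

(* Nonnegative real power, with the convention 0^a = 0 (used for a > 0). *)
Definition rpow (x a : R) : R :=
  if Rle_dec x 0 then 0 else Rpower x a.

Definition ind (S : R -> Prop) (x : R) : R :=
  if excluded_middle_informative (S x) then 1 else 0.

Definition is_interval (I : R -> Prop) : Prop :=
  forall x y z, I x -> I z -> x <= y -> y <= z -> I y.

(* Riemann integral over [a,b] (value is independent of the integrability proof;
   unspecified when f is not Riemann integrable). *)
Definition RInt (f : R -> R) (a b : R) : R :=
  epsilon (inhabits 0)
    (fun v => exists pr : Riemann_integrable f a b, RiemannInt pr = v).

(* Integral over R of a function with bounded support: the eventually
   constant value of the integral over [-M, M]. *)
Definition IntR (h : R -> R) : R :=
  epsilon (inhabits 0)
    (fun v => exists M, forall M', M <= M' -> RInt h (- M') M' = v).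

Definition continuous2 (g : R -> R -> R) : Prop :=
  forall x y eps, 0 < eps -> exists delta, 0 < delta /\
    forall x' y', Rabs (x' - x) < delta -> Rabs (y' - y) < delta ->
      Rabs (g x' y' - g x y) < eps.

(* C^infinity on R^2: there is a family D of functions indexed by words in
   {x-derivative (true), y-derivative (false)}, with D nil = g, such that
   each D s is jointly continuous and its partial derivatives exist
   everywhere and are given by D (true :: s), D (false :: s). *)
Definition smooth2 (g : R -> R -> R) : Prop :=
  exists D : list bool -> R -> R -> R,
    D nil = g /\
    forall s, continuous2 (D s) /\
      (forall x y, derivable_pt_lim (fun t => D s t y) x (D (true :: s) x y)) /\
      (forall x y, derivable_pt_lim (fun t => D s x t) y (D (false :: s) x y)).

Definition compact_support2 (g : R -> R -> R) : Prop :=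
  exists M, forall x y, M < Rabs x \/ M < Rabs y -> g x y = 0.

(* A complex-valued f = u + i v on R^2; its modulus. *)
Definition cabs2 (u v : R -> R -> R) (x y : R) : R :=
  sqrt (u x y ^ 2 + v x y ^ 2).

Definition dyad (k n : Z) (y : R) : Prop :=
  powerRZ 2 k * (IZR n - 1) <= y <= powerRZ 2 k * (IZR n + 1).
Definition dyad_len (k : Z) : R := 2 * powerRZ 2 k.

Definition q0 : R := 20 / 11.

Definition norm_IJ (u v : R -> R -> R) (I J : R -> Prop) : R :=
  rpow (IntR (fun x => IntR (fun y =>
          ind I x * ind J y * rpow (cabs2 u v x y) q0))) (1 / q0).

Definition norm_mixed (u v : R -> R -> R) (I : R -> Prop) : R :=
  rpow (IntR (fun x =>
          rpow (rpow (IntR (fun y => ind I x * rpow (cabs2 u v x y) 2)) (1 / 2))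
               q0)) (1 / q0).

Definition dyad_term (p : R) (u v : R -> R -> R) (I : R -> Prop) (kn : Z * Z) : R :=
  rpow (dyad_len (fst kn)) (- p / 20) * rpow (norm_IJ u v I (dyad (fst kn) (snd kn))) p.

From Stdlib Require Import Reals ZArith List.
From Stdlib Require Import Lra Lia Psatz Classical ClassicalEpsilon FunctionalExtensionality FinFun.
(* Imported after Reals, whose [Rtopology.ind] would otherwise shadow [Defs.ind]. *)
From Pilot Require Import Defs.
Open Scope R_scope.

(* Write h = |f|^2, theta = q0/2 = 10/11 and, for a segment [a, b],
     M(a, b) = ||f 1_{I x [a,b]}||^q0 in L^q0_x L^2_y,
     A(a, b) = (b - a)^(theta - 1) ||f 1_{I x [a,b]}||^q0 in L^q0_{x,y},
   so that the term indexed by J is A(J)^s with s = p/q0.  Hoelder in y gives A <= M; Minkowski's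
   inequality in x, reversed because theta < 1, makes M^(1/theta) superadditive over adjacent
   segments; and A of a segment is exactly 2^(theta - 1) < 1 times the sum of A over its halves.
   On the dyadic tree the potential weight_A M^s - weight_B A^s dominates A^s plus the potentials
   of the two children: either one child is much smaller than the other, and the contraction
   2^(theta - 1) pays, or they are comparable, and the strict superadditivity of x |-> x^(p/2)
   (p/2 > 1) applied to M^(1/theta) pays.  Telescoping over the levels bounds the sum by
   weight_A M(R)^s.  An interval of D is the union of two standard dyadic intervals, which costs
   a factor 2^s * 2. *)

(** * Riemann integrals on segments and on the line *)

Lemma Riemann_integrable_null_inside f a b :
  a <= b -> (forall x, a < x < b -> f x = 0) -> Riemann_integrable f a b.
Proof.
  intros Hab Hf eps.
  assert (Hs : IsStepFun f a b).
  { exists (a :: b :: nil), (0 :: nil).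
    unfold adapted_couple; repeat split.
    - intros i Hi; simpl in Hi; inversion Hi; [simpl; lra | lia].
    - simpl; unfold Rmin; destruct (Rle_dec a b); lra.
    - simpl; unfold Rmax; destruct (Rle_dec a b); lra.
    - intros i Hi x Hx; simpl in Hi.
      destruct i; [apply Hf, Hx | simpl in Hi; lia]. }
  exists (mkStepFun Hs), (mkStepFun (StepFun_P4 a b 0)); split.
  - intros t _; simpl; unfold fct_cte. rewrite Rminus_diag, Rabs_R0; lra.
  - rewrite StepFun_P18, Rmult_0_l, Rabs_R0. apply cond_pos.
Qed.

Lemma Riemann_integrable_eq_inside f g a b : a <= b -> Riemann_integrable g a b ->
  (forall x, a < x < b -> f x = g x) -> Riemann_integrable f a b.
Proof.
  intros Hab Hg Hfg.
  apply Riemann_integrable_ext with (fun x => g x + 1 * (f x - g x)); [intros; ring|].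
  apply RiemannInt_P10; [exact Hg|].
  apply Riemann_integrable_null_inside; [exact Hab|].
  intros x Hx; rewrite Hfg; [ring | exact Hx].
Qed.

Lemma RInt_RiemannInt f a b (pr : Riemann_integrable f a b) : RInt f a b = RiemannInt pr.
Proof.
  unfold RInt.
  destruct (epsilon_spec (inhabits 0)
    (fun v => exists pr : Riemann_integrable f a b, RiemannInt pr = v)) as [pr' <-].
  { exists (RiemannInt pr), pr; reflexivity. }
  apply RiemannInt_P5.
Qed.

Lemma IntR_eventually h v :
  (exists M, forall M', M <= M' -> RInt h (- M') M' = v) -> IntR h = v.
Proof.
  intros [M HM]. unfold IntR.
  destruct (epsilon_spec (inhabits 0)
    (fun v => exists M, forall M', M <= M' -> RInt h (- M') M' = v)) as [M2 HM2].
  { exists v, M; exact HM. }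
  rewrite <- (HM2 (Rmax M M2)) by apply Rmax_r.
  apply HM, Rmax_l.
Qed.

Lemma RInt_null_inside f a b :
  a <= b -> (forall x, a < x < b -> f x = 0) -> RInt f a b = 0.
Proof.
  intros Hab Hf.
  set (pr := Riemann_integrable_null_inside f a b Hab Hf).
  rewrite (RInt_RiemannInt _ _ _ pr), (RiemannInt_P18 pr (RiemannInt_P14 a b 0) Hab).
  - rewrite RiemannInt_P15; ring.
  - intros x Hx; apply Hf, Hx.
Qed.

Lemma RInt_Chasles f a b c : Riemann_integrable f a b -> Riemann_integrable f b c ->
  RInt f a b + RInt f b c = RInt f a c.
Proof.
  intros p1 p2.
  rewrite (RInt_RiemannInt _ _ _ p1), (RInt_RiemannInt _ _ _ p2),
    (RInt_RiemannInt _ _ _ (RiemannInt_P24 p1 p2)).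
  apply RiemannInt_P26.
Qed.

Lemma RInt_plus_scal f g l a b : Riemann_integrable f a b -> Riemann_integrable g a b ->
  RInt (fun x => f x + l * g x) a b = RInt f a b + l * RInt g a b.
Proof.
  intros p1 p2.
  rewrite (RInt_RiemannInt _ _ _ p1), (RInt_RiemannInt _ _ _ p2),
    (RInt_RiemannInt _ _ _ (RiemannInt_P10 l p1 p2)).
  apply RiemannInt_P13.
Qed.

Lemma RInt_le f g a b : a <= b -> Riemann_integrable f a b -> Riemann_integrable g a b ->
  (forall x, a < x < b -> f x <= g x) -> RInt f a b <= RInt g a b.
Proof.
  intros Hab p1 p2 H.
  rewrite (RInt_RiemannInt _ _ _ p1), (RInt_RiemannInt _ _ _ p2).
  apply RiemannInt_P19; auto.
Qed.

Lemma RInt_eq_inside f g a b : a <= b -> Riemann_integrable g a b ->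
  (forall x, a < x < b -> f x = g x) -> RInt f a b = RInt g a b.
Proof.
  intros Hab p2 H.
  set (p1 := Riemann_integrable_eq_inside f g a b Hab p2 H).
  rewrite (RInt_RiemannInt _ _ _ p1), (RInt_RiemannInt _ _ _ p2).
  apply RiemannInt_P18; auto.
Qed.

Lemma RInt_const c a b : RInt (fun _ => c) a b = c * (b - a).
Proof.
  change (RInt (fct_cte c) a b = c * (b - a)).
  rewrite (RInt_RiemannInt _ _ _ (RiemannInt_P14 a b c)). apply RiemannInt_P15.
Qed.

Lemma RInt_scal f c a b : Riemann_integrable f a b ->
  RInt (fun y => c * f y) a b = c * RInt f a b.
Proof.
  intros p.
  rewrite <- (Rplus_0_l (c * _)), <- (Rmult_0_l (b - a)), <- RInt_const.
  rewrite <- (RInt_plus_scal _ _ _ _ _ (RiemannInt_P14 a b 0) p).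
  f_equal; apply functional_extensionality; intros; unfold fct_cte; ring.
Qed.

Lemma RInt_abs f a b : a <= b -> Riemann_integrable f a b ->
  Rabs (RInt f a b) <= RInt (fun x => Rabs (f x)) a b.
Proof.
  intros Hab p.
  rewrite (RInt_RiemannInt _ _ _ p), (RInt_RiemannInt _ _ _ (RiemannInt_P16 p)).
  apply RiemannInt_P17; auto.
Qed.

Lemma RInt_ge0 f a b : a <= b -> Riemann_integrable f a b ->
  (forall y, 0 <= f y) -> 0 <= RInt f a b.
Proof.
  intros Hab pf Hf. rewrite <- (Rmult_0_l (b - a)), <- RInt_const.
  apply RInt_le; auto. exact (RiemannInt_P14 a b 0).
Qed.

Definition has_compact_support (F : R -> R) : Prop :=
  exists K, 0 <= K /\ forall x, K <= Rabs x -> F x = 0.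

Definition integrable_cs (F : R -> R) : Type :=
  (has_compact_support F * forall a b, a <= b -> Riemann_integrable F a b)%type.

Lemma IntR_RInt_sym F K : 0 <= K -> (forall x, K <= Rabs x -> F x = 0) ->
  (forall a b, a <= b -> Riemann_integrable F a b) -> IntR F = RInt F (- K) K.
Proof.
  intros HK HF Hi. apply IntR_eventually. exists K. intros M' HM'.
  assert (p1 : Riemann_integrable F (- M') (- K)) by (apply Hi; lra).
  assert (p2 : Riemann_integrable F (- K) K) by (apply Hi; lra).
  assert (p3 : Riemann_integrable F K M') by (apply Hi; lra).
  rewrite <- (RInt_Chasles _ _ _ _ (RiemannInt_P24 p1 p2) p3), <- (RInt_Chasles _ _ _ _ p1 p2).
  rewrite (RInt_null_inside F (- M') (- K)), (RInt_null_inside F K M'); try lra.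
  - intros x Hx; apply HF. rewrite Rabs_right; lra.
  - intros x Hx; apply HF. rewrite Rabs_left; lra.
Qed.

Lemma has_compact_support_common F G : has_compact_support F -> has_compact_support G ->
  exists K, 0 <= K /\
    (forall x, K <= Rabs x -> F x = 0) /\ (forall x, K <= Rabs x -> G x = 0).
Proof.
  intros [K1 [H1 HF]] [K2 [H2 HG]]. exists (Rmax K1 K2).
  assert (K1 <= Rmax K1 K2) by apply Rmax_l. assert (K2 <= Rmax K1 K2) by apply Rmax_r.
  repeat split; [lra | intros x Hx; apply HF | intros x Hx; apply HG]; lra.
Qed.

Lemma integrable_cs_plus_scal F G l : integrable_cs F -> integrable_cs G ->
  integrable_cs (fun x => F x + l * G x).
Proof.
  intros [sF iF] [sG iG]. split.
  - destruct (has_compact_support_common F G sF sG) as [K [HK [HF HG]]].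
    exists K; split; [exact HK|]. intros x Hx; rewrite HF, HG; auto; ring.
  - intros a b Hab; apply RiemannInt_P10; auto.
Qed.

Lemma IntR_plus_scal F G l : integrable_cs F -> integrable_cs G ->
  IntR (fun x => F x + l * G x) = IntR F + l * IntR G.
Proof.
  intros iF iG.
  destruct (has_compact_support_common F G (fst iF) (fst iG)) as [K [HK [HF HG]]].
  rewrite (IntR_RInt_sym F K HK HF (snd iF)), (IntR_RInt_sym G K HK HG (snd iG)).
  rewrite (IntR_RInt_sym _ K HK); [| intros x Hx; rewrite HF, HG; auto; ring
                                  | apply (integrable_cs_plus_scal F G l iF iG)].
  apply RInt_plus_scal; [apply (snd iF) | apply (snd iG)]; lra.
Qed.

Lemma IntR_le F G : integrable_cs F -> integrable_cs G ->
  (forall x, F x <= G x) -> IntR F <= IntR G.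
Proof.
  intros iF iG H.
  destruct (has_compact_support_common F G (fst iF) (fst iG)) as [K [HK [HF HG]]].
  rewrite (IntR_RInt_sym F K HK HF (snd iF)), (IntR_RInt_sym G K HK HG (snd iG)).
  apply RInt_le; [lra | apply (snd iF); lra | apply (snd iG); lra | intros; apply H].
Qed.

Lemma integrable_cs_0 : integrable_cs (fun _ => 0).
Proof. split; [exists 0; split; [lra | auto] | intros a b _; apply (RiemannInt_P14 a b 0)]. Qed.

Lemma IntR_0 : IntR (fun _ => 0) = 0.
Proof. apply IntR_eventually. exists 0. intros M' _. rewrite RInt_const. ring. Qed.

Lemma IntR_scal F l : integrable_cs F -> IntR (fun x => l * F x) = l * IntR F.
Proof.
  intros iF.
  replace (fun x => l * F x) with (fun x => (fun _ => 0) x + l * F x)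
    by (apply functional_extensionality; intros; ring).
  rewrite IntR_plus_scal, IntR_0; auto using integrable_cs_0. ring.
Qed.

Lemma IntR_ge0 F : integrable_cs F -> (forall x, 0 <= F x) -> 0 <= IntR F.
Proof. intros iF H. rewrite <- IntR_0. apply IntR_le; auto using integrable_cs_0. Qed.

Lemma ind_in I x : I x -> ind I x = 1.
Proof. intros H; unfold ind; destruct (excluded_middle_informative (I x)); tauto. Qed.

Lemma ind_out I x : ~ I x -> ind I x = 0.
Proof. intros H; unfold ind; destruct (excluded_middle_informative (I x)); tauto. Qed.

Lemma not_upper_bound_lt (S : R -> Prop) x : ~ is_upper_bound S x -> exists y, S y /\ x < y.
Proof.
  intros H. apply NNPP; intro H'. apply H. intros y Hy.
  destruct (Rle_dec y x); auto. exfalso; apply H'; exists y; split; auto; lra.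
Qed.

(* Sigma-typed because it is eliminated to build a [Riemann_integrable] term, which lives in Type. *)
Lemma interval_trace I a b : is_interval I -> (exists x, a <= x <= b /\ I x) ->
  { al : R & { be : R | a <= al <= be /\ be <= b /\
    (forall x, a <= x <= b -> I x -> al <= x <= be) /\ (forall x, al < x < be -> I x) } }.
Proof.
  intros HI Hne. set (S := fun x => a <= x <= b /\ I x).
  assert (bS : bound S) by (exists b; intros x [Hx _]; lra).
  destruct (completeness S bS Hne) as [be [Hbe1 Hbe2]].
  set (S' := fun x => S (- x)).
  assert (bS' : bound S') by (exists (- a); intros x [Hx _]; lra).
  assert (neS' : exists x, S' x).
  { destruct Hne as [x Hx]; exists (- x); unfold S'; rewrite Ropp_involutive; exact Hx. }
  destruct (completeness S' bS' neS') as [ga [Hga1 Hga2]].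
  assert (Hin : forall s, S s -> - ga <= s <= be).
  { intros s Hs; split; [| apply Hbe1; auto].
    assert (- s <= ga); [apply Hga1; unfold S'; rewrite Ropp_involutive; auto | lra]. }
  exists (- ga), be. split; [split|split; [|split]].
  - assert (ga <= - a); [apply Hga2; intros x [Hx _]; lra | lra].
  - destruct Hne as [s0 Hs0]; destruct (Hin s0 Hs0); lra.
  - apply Hbe2; intros x [Hx _]; lra.
  - intros x Hx HIx; apply Hin; split; auto.
  - intros x Hx.
    destruct (not_upper_bound_lt S x) as [s2 [Hs2 Hxs2]].
    { intro Hub; specialize (Hbe2 x Hub); lra. }
    destruct (not_upper_bound_lt S' (- x)) as [t [Ht Hxt]].
    { intro Hub; specialize (Hga2 (- x) Hub); lra. }
    apply HI with (- t) s2; [apply Ht | apply Hs2 | lra | lra].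
Qed.

Lemma Riemann_integrable_ind I g a b : is_interval I -> (forall x, continuity_pt g x) ->
  a <= b -> Riemann_integrable (fun x => ind I x * g x) a b.
Proof.
  intros HI Hg Hab.
  destruct (excluded_middle_informative (exists x, a <= x <= b /\ I x)) as [Hne|Hem].
  2:{ apply Riemann_integrable_null_inside; auto. intros x Hx. rewrite ind_out; [ring|].
      intro HIx; apply Hem; exists x; split; auto; lra. }
  destruct (interval_trace I a b HI Hne) as [al [be [[Hal Halbe] [Hbe [Hout Hinside]]]]].
  assert (p1 : Riemann_integrable (fun x => ind I x * g x) a al).
  { apply Riemann_integrable_null_inside; auto. intros x Hx. rewrite ind_out; [ring|].
    intro HIx. specialize (Hout x ltac:(lra) HIx); lra. }
  assert (p3 : Riemann_integrable (fun x => ind I x * g x) be b).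
  { apply Riemann_integrable_null_inside; auto. intros x Hx. rewrite ind_out; [ring|].
    intro HIx. specialize (Hout x ltac:(lra) HIx); lra. }
  assert (p2 : Riemann_integrable (fun x => ind I x * g x) al be).
  { apply (Riemann_integrable_eq_inside _ g); [lra | |].
    - apply continuity_implies_RiemannInt; [lra | intros; apply Hg].
    - intros x Hx. rewrite ind_in; [ring | auto]. }
  exact (RiemannInt_P24 (RiemannInt_P24 p1 p2) p3).
Qed.

(** * Real powers *)

Lemma exp_le_mono x y : x <= y -> exp x <= exp y.
Proof. intros [H|H]; [left; apply exp_increasing; auto | subst; lra]. Qed.

Lemma rpow_le0 x a : x <= 0 -> rpow x a = 0.
Proof. intros H; unfold rpow; destruct (Rle_dec x 0); [auto | lra]. Qed.

Lemma rpow_pos x a : 0 < x -> rpow x a = Rpower x a.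
Proof. intros H; unfold rpow; destruct (Rle_dec x 0); [lra | auto]. Qed.

Lemma rpow_0 a : rpow 0 a = 0.
Proof. apply rpow_le0; lra. Qed.

Lemma Rpower_gt0 x a : 0 < Rpower x a.
Proof. apply exp_pos. Qed.

Lemma rpow_gt0 x a : 0 < x -> 0 < rpow x a.
Proof. intros H; rewrite rpow_pos; auto; apply Rpower_gt0. Qed.

Lemma rpow_ge0 x a : 0 <= rpow x a.
Proof. unfold rpow; destruct (Rle_dec x 0); [lra | left; apply Rpower_gt0]. Qed.

Lemma rpow_1 x : 0 <= x -> rpow x 1 = x.
Proof. intros [H|<-]; [rewrite rpow_pos; auto; apply Rpower_1; auto | apply rpow_0]. Qed.

Lemma rpow_mult x a b : 0 <= x -> rpow (rpow x a) b = rpow x (a * b).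
Proof.
  intros [H|<-]; [| rewrite !rpow_0; auto].
  rewrite (rpow_pos x a), (rpow_pos x); auto.
  rewrite rpow_pos; [apply Rpower_mult | apply Rpower_gt0].
Qed.

Lemma rpow_mul x y a : 0 <= x -> 0 <= y -> rpow (x * y) a = rpow x a * rpow y a.
Proof.
  intros [Hx|<-] [Hy|<-]; rewrite ?Rmult_0_l, ?Rmult_0_r, ?rpow_0; try ring.
  rewrite !rpow_pos; auto; [| apply Rmult_lt_0_compat; auto].
  symmetry; apply Rpower_mult_distr; auto.
Qed.

Lemma rpow_inv x a : 0 < x -> rpow (/ x) a = / rpow x a.
Proof.
  intros H. rewrite !rpow_pos; auto; [| apply Rinv_0_lt_compat; auto].
  unfold Rpower. rewrite ln_Rinv, <- exp_Ropp; auto. f_equal; ring.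
Qed.

Lemma rpow_plus x a b : 0 < x -> rpow x (a + b) = rpow x a * rpow x b.
Proof. intros H; rewrite !rpow_pos; auto; apply Rpower_plus. Qed.

Lemma rpow_le x y a : 0 <= a -> 0 <= x <= y -> rpow x a <= rpow y a.
Proof.
  intros Ha [[Hx|<-] Hxy]; [| rewrite rpow_0; apply rpow_ge0].
  rewrite !rpow_pos; try lra. apply Rle_Rpower_l; auto; lra.
Qed.

Lemma rpow_le_exponent x a b : 0 <= x <= 1 -> a <= b -> rpow x b <= rpow x a.
Proof.
  intros [[Hx|<-] H1] Hab; [| rewrite !rpow_0; lra].
  rewrite !rpow_pos; auto. apply exp_le_mono.
  assert (ln x <= 0).
  { destruct H1 as [H1|H1]; [| subst; rewrite ln_1; lra].
    left; rewrite <- ln_1; apply ln_increasing; auto. }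
  nra.
Qed.

Lemma rpow_rpow_inv x a : 0 < a -> 0 <= x -> rpow (rpow x a) (/ a) = x.
Proof. intros Ha Hx. rewrite rpow_mult, Rinv_r; [apply rpow_1 | ..]; lra. Qed.

Lemma rpow_young r x y : 0 < r < 1 -> 0 <= x -> 0 <= y ->
  rpow x r * rpow y (1 - r) <= r * x + (1 - r) * y.
Proof.
  intros Hr [Hx|<-] [Hy|<-]; rewrite ?rpow_0; try nra.
  set (m := r * x + (1 - r) * y).
  assert (Hm : 0 < m) by (unfold m; nra).
  rewrite !rpow_pos; auto. unfold Rpower. rewrite <- exp_plus.
  (* tangent line of ln at m, i.e. exp t >= 1 + t *)
  assert (H1 := exp_ineq1_le (ln x - ln m)).
  assert (H2 := exp_ineq1_le (ln y - ln m)).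
  unfold Rminus in H1, H2. rewrite exp_plus, exp_Ropp, exp_ln, exp_ln in H1, H2; auto.
  assert (r * (x / m) + (1 - r) * (y / m) = 1) by (unfold m in *; field; lra).
  assert (r * ln x + (1 - r) * ln y <= ln m) by (unfold Rdiv in *; nra).
  apply Rle_trans with (exp (ln m)); [apply exp_le_mono; lra | rewrite exp_ln; lra].
Qed.

Lemma rpow_concave r l U V : 0 < r < 1 -> 0 <= l <= 1 -> 0 <= U -> 0 <= V ->
  l * rpow U r + (1 - l) * rpow V r <= rpow (l * U + (1 - l) * V) r.
Proof.
  intros Hr Hl HU HV. set (w := l * U + (1 - l) * V).
  assert (Hw : 0 <= w) by (unfold w; nra).
  assert (0 <= rpow U r) by apply rpow_ge0. assert (0 <= rpow V r) by apply rpow_ge0.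
  destruct Hw as [Hw|Hw].
  - assert (A1 := rpow_young _ _ _ Hr HU (Rlt_le _ _ Hw)).
    assert (A2 := rpow_young _ _ _ Hr HV (Rlt_le _ _ Hw)).
    assert (Hwr : rpow w r * rpow w (1 - r) = w).
    { rewrite <- rpow_plus; auto. replace (r + (1 - r)) with 1 by ring. apply rpow_1; lra. }
    assert (Hp : 0 < rpow w (1 - r)) by (apply rpow_gt0; auto).
    apply Rmult_le_reg_r with (rpow w (1 - r)); auto. rewrite Hwr.
    unfold w in *. nra.
  - assert (l * U = 0) by (unfold w in Hw; nra). assert ((1 - l) * V = 0) by (unfold w in Hw; nra).
    assert (E1 : l * rpow U r = 0).
    { destruct (Rmult_integral _ _ H1) as [E|E]; rewrite E, ?rpow_0; ring. }
    assert (E2 : (1 - l) * rpow V r = 0).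
    { destruct (Rmult_integral _ _ H2) as [E|E]; rewrite E, ?rpow_0; ring. }
    rewrite E1, E2, Rplus_0_r. apply rpow_ge0.
Qed.

Lemma rpow_bernoulli s z : 1 <= s -> 0 <= z -> 1 + s * z <= rpow (1 + z) s.
Proof.
  intros [Hs|<-] Hz; [| rewrite rpow_1; lra].
  assert (Hr : 0 < / s < 1).
  { split; [apply Rinv_0_lt_compat; lra|]. rewrite <- Rinv_1. apply Rinv_lt_contravar; lra. }
  assert (A := rpow_young (/ s) (1 + s * z) 1 Hr ltac:(nra) ltac:(lra)).
  rewrite (rpow_pos 1) in A by lra.
  unfold Rpower in A. rewrite ln_1, Rmult_0_r, exp_0, Rmult_1_r in A.
  replace (/ s * (1 + s * z) + (1 - / s) * 1) with (1 + z) in A by (field; lra).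
  rewrite <- (rpow_rpow_inv (1 + s * z) (/ s)), Rinv_inv; [| lra | nra].
  apply rpow_le; [lra|]. split; [apply rpow_ge0 | exact A].
Qed.

Lemma rpow_le_self s t : 1 <= s -> 0 <= t <= 1 -> rpow t s <= t.
Proof. intros Hs Ht. rewrite <- (rpow_1 t) at 2; [apply rpow_le_exponent | ..]; lra. Qed.

Lemma rpow_superadditive s x y : 1 <= s -> 0 <= x -> 0 <= y ->
  rpow x s + rpow y s <= rpow (x + y) s.
Proof.
  intros Hs Hx Hy. destruct (Req_dec (x + y) 0) as [E|E].
  { replace x with 0 by lra. replace y with 0 by lra. rewrite Rplus_0_r, rpow_0. lra. }
  set (S := x + y). assert (HS : 0 < S) by (unfold S; lra).
  assert (HiS : 0 < / S) by (apply Rinv_0_lt_compat; lra).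
  assert (HSi : S * / S = 1) by (field; lra).
  replace x with (S * (x / S)) at 1 by (field; lra).
  replace y with (S * (y / S)) at 1 by (field; lra).
  assert (Hx1 : 0 <= x / S <= 1) by (unfold S, Rdiv in *; split; nra).
  assert (Hy1 : 0 <= y / S <= 1) by (unfold S, Rdiv in *; split; nra).
  rewrite !rpow_mul; try lra.
  assert (rpow (x / S) s <= x / S) by (apply rpow_le_self; auto).
  assert (rpow (y / S) s <= y / S) by (apply rpow_le_self; auto).
  assert (0 < rpow S s) by (apply rpow_gt0; auto).
  assert (x / S + y / S = 1) by (unfold S; field; lra).
  nra.
Qed.

(* Bernoulli applied to (1 + Y/X)^s. *)
Lemma rpow_superadditive_gap s X Y : 1 <= s -> 0 <= Y <= X ->
  (s - 1) * rpow Y s <= rpow (X + Y) s - rpow X s - rpow Y s.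
Proof.
  intros Hs [HY HYX]. destruct (Req_dec X 0) as [HX|HX].
  { subst. replace Y with 0 by lra. rewrite Rplus_0_r, rpow_0. lra. }
  set (z := Y / X).
  assert (Hz : 0 <= z) by (apply Rmult_le_pos; [lra | left; apply Rinv_0_lt_compat; lra]).
  assert (E : X + Y = X * (1 + z)) by (unfold z; field; lra).
  rewrite E, rpow_mul; try lra.
  assert (B := rpow_bernoulli s z Hs Hz).
  assert (HXs : 0 < rpow X s) by (apply rpow_gt0; lra).
  assert (K : rpow Y s <= rpow X s * z).
  { destruct HY as [HY|<-]; [| unfold z; rewrite Rdiv_0_l, rpow_0; lra].
    replace s with ((s - 1) + 1) at 1 2 by ring.
    rewrite !rpow_plus, !rpow_1; try lra.
    assert (rpow Y (s - 1) <= rpow X (s - 1)) by (apply rpow_le; lra).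
    assert (rpow X (s - 1) * X * z = rpow X (s - 1) * Y) by (unfold z; field; lra).
    nra. }
  nra.
Qed.

Lemma rpow_add_le s a b : 0 <= s -> 0 <= a -> 0 <= b ->
  rpow (a + b) s <= rpow 2 s * (rpow a s + rpow b s).
Proof.
  intros Hs Ha Hb.
  assert (0 <= rpow a s) by apply rpow_ge0. assert (0 <= rpow b s) by apply rpow_ge0.
  assert (0 <= rpow 2 s) by apply rpow_ge0.
  destruct (Rle_dec a b) as [Hab|Hab].
  - assert (rpow (a + b) s <= rpow (2 * b) s) by (apply rpow_le; lra).
    rewrite rpow_mul in H2 by lra. nra.
  - assert (rpow (a + b) s <= rpow (2 * a) s) by (apply rpow_le; lra).
    rewrite rpow_mul in H2 by lra. nra.
Qed.

(* Hölder's inequality on a segment of length L, from the family of Young inequalities: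
   optimise E lam^(1-r) <= r H + (1-r) lam L over lam > 0. *)
Lemma rpow_young_optimize r E H L : 0 < r < 1 -> 0 <= E -> 0 <= H -> 0 < L ->
  (forall lam, 0 < lam -> E * rpow lam (1 - r) <= r * H + (1 - r) * lam * L) ->
  E <= rpow L (1 - r) * rpow H r.
Proof.
  intros Hr HE [HH|<-] HL Hyoung.
  - set (lam := H / L). assert (Hlam : 0 < lam) by (apply Rdiv_lt_0_compat; auto).
    specialize (Hyoung lam Hlam).
    replace (r * H + (1 - r) * lam * L) with H in Hyoung by (unfold lam; field; lra).
    assert (E1 : rpow lam (1 - r) = rpow H (1 - r) * / rpow L (1 - r)).
    { unfold lam, Rdiv.
      rewrite rpow_mul, rpow_inv; auto; [lra | left; apply Rinv_0_lt_compat; auto]. }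
    assert (E2 : H = rpow H r * rpow H (1 - r)).
    { rewrite <- rpow_plus, Rplus_minus, rpow_1; lra. }
    assert (P1 : 0 < rpow H (1 - r)) by (apply rpow_gt0; auto).
    assert (P2 : 0 < rpow L (1 - r)) by (apply rpow_gt0; auto).
    apply Rmult_le_reg_r with (rpow lam (1 - r)); [apply rpow_gt0; auto|].
    rewrite E1 in *.
    replace (rpow L (1 - r) * rpow H r * (rpow H (1 - r) * / rpow L (1 - r)))
      with (rpow H r * rpow H (1 - r)) by (field; lra).
    lra.
  - rewrite rpow_0, Rmult_0_r. destruct HE as [HE|<-]; [exfalso | lra].
    (* with H = 0, lam = (E / 2L)^(1/r) gives E <= (1 - r) E / 2 *)
    set (lam := rpow (E / (2 * L)) (/ r)).
    assert (Hq0 : 0 < E / (2 * L)) by (apply Rdiv_lt_0_compat; lra).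
    assert (Hlam : 0 < lam) by (apply rpow_gt0; auto).
    specialize (Hyoung lam Hlam). rewrite Rmult_0_r, Rplus_0_l in Hyoung.
    assert (Er : rpow lam r = E / (2 * L)) by (unfold lam; rewrite rpow_mult, Rinv_l, rpow_1; lra).
    assert (Elam : lam = E / (2 * L) * rpow lam (1 - r)).
    { rewrite <- Er, <- rpow_plus, Rplus_minus, rpow_1; lra. }
    assert (HP : 0 < rpow lam (1 - r)) by (apply rpow_gt0; auto).
    rewrite Elam in Hyoung at 2.
    assert (E <= (1 - r) * E / 2).
    { apply Rmult_le_reg_r with (rpow lam (1 - r)); [exact HP|].
      replace ((1 - r) * E / 2 * rpow lam (1 - r))
        with ((1 - r) * (E / (2 * L) * rpow lam (1 - r)) * L) by (field; lra).
      exact Hyoung. }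
    nra.
Qed.
(** * Continuity *)

Lemma continuity_pt_intro f x0 :
  (forall eps, 0 < eps -> exists d, 0 < d /\
     forall x, Rabs (x - x0) < d -> Rabs (f x - f x0) < eps) ->
  continuity_pt f x0.
Proof.
  intros H. unfold continuity_pt, continue_in, limit1_in, limit_in. simpl. unfold R_dist.
  intros eps Heps. destruct (H eps Heps) as [d [Hd Hd']]. exists d; split; [lra|].
  intros x [_ Hx]; apply Hd'; auto.
Qed.

Lemma continuity_pt_elim f x0 : continuity_pt f x0 ->
  forall eps, 0 < eps -> exists d, 0 < d /\
    forall x, Rabs (x - x0) < d -> Rabs (f x - f x0) < eps.
Proof.
  intros H eps Heps.
  unfold continuity_pt, continue_in, limit1_in, limit_in in H. simpl in H. unfold R_dist in H.
  destruct (H eps (Rlt_gt _ _ Heps)) as [d [Hd Hd']]. exists d; split; [lra|].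
  intros x Hx. destruct (Req_dec x0 x).
  - subst; rewrite Rminus_diag, Rabs_R0; lra.
  - apply Hd'; split; [split; [exact I | auto] | auto].
Qed.
Arguments continuity_pt_elim {f x0}.

Lemma continuity_pt_rpow a x0 : 0 < a -> continuity_pt (fun x => rpow x a) x0.
Proof.
  intros Ha. apply continuity_pt_intro. intros eps Heps.
  destruct (Rtotal_order x0 0) as [Hn|[Hz|Hp]].
  - exists (- x0); split; [lra|]. intros x Hx.
    rewrite !rpow_le0; [rewrite Rminus_diag, Rabs_R0; auto | lra | ].
    apply Rabs_def2 in Hx; lra.
  - subst. exists (Rpower eps (/ a)); split; [apply Rpower_gt0|].
    intros x Hx. rewrite rpow_0, Rminus_0_r. rewrite Rminus_0_r in Hx.
    destruct (Rle_dec x 0).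
    + rewrite rpow_le0; auto. rewrite Rabs_R0; auto.
    + rewrite Rabs_right; [| apply Rle_ge, rpow_ge0].
      rewrite rpow_pos; [|lra]. rewrite Rabs_right in Hx; [|lra].
      apply Rlt_le_trans with (Rpower (Rpower eps (/ a)) a).
      * apply Rlt_Rpower_l; auto; lra.
      * rewrite Rpower_mult, Rinv_l, Rpower_1; lra.
  - assert (Hc : continuity_pt (fun x => Rpower x a) x0).
    { apply derivable_continuous_pt. exists (a * Rpower x0 (a - 1)).
      apply derivable_pt_lim_power; auto. }
    destruct (continuity_pt_elim Hc eps Heps) as [d [Hd Hd']].
    exists (Rmin d x0); split; [apply Rmin_pos; auto|].
    intros x Hx.
    assert (Rabs (x - x0) < d) by (apply Rlt_le_trans with (Rmin d x0); [auto | apply Rmin_l]).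
    assert (Rabs (x - x0) < x0) by (apply Rlt_le_trans with (Rmin d x0); [auto | apply Rmin_r]).
    apply Rabs_def2 in H0. rewrite !rpow_pos; try lra. apply Hd'; auto.
Qed.

Lemma continuous2_comp2 g1 g2 (phi : R -> R -> R) : continuous2 g1 -> continuous2 g2 ->
  (forall a b eps, 0 < eps -> exists d, 0 < d /\ forall a' b',
     Rabs (a' - a) < d -> Rabs (b' - b) < d -> Rabs (phi a' b' - phi a b) < eps) ->
  continuous2 (fun x y => phi (g1 x y) (g2 x y)).
Proof.
  intros H1 H2 Hp x y eps Heps.
  destruct (Hp (g1 x y) (g2 x y) eps Heps) as [d [Hd Hd']].
  destruct (H1 x y d Hd) as [d1 [Hd1 Hd1']].
  destruct (H2 x y d Hd) as [d2 [Hd2 Hd2']].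
  assert (M1 := Rmin_l d1 d2). assert (M2 := Rmin_r d1 d2).
  exists (Rmin d1 d2); split; [apply Rmin_pos; auto|].
  intros x' y' Hx Hy. apply Hd'; [apply Hd1' | apply Hd2']; lra.
Qed.

Lemma Rabs_sqr_sub_le a a' d : d <= 1 -> Rabs (a' - a) < d ->
  Rabs (a' ^ 2 - a ^ 2) <= d * (2 * Rabs a + 1).
Proof.
  intros Hd H. replace (a' ^ 2 - a ^ 2) with ((a' - a) * (a' + a)) by ring.
  rewrite Rabs_mult. apply Rmult_le_compat; try apply Rabs_pos; [lra|].
  replace (a' + a) with ((a' - a) + 2 * a) by ring.
  apply Rle_trans with (Rabs (a' - a) + Rabs (2 * a)); [apply Rabs_triang|].
  rewrite Rabs_mult, (Rabs_right 2); lra.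
Qed.

Lemma sum_squares_continuous a b eps : 0 < eps -> exists d, 0 < d /\ forall a' b',
  Rabs (a' - a) < d -> Rabs (b' - b) < d -> Rabs ((a' ^ 2 + b' ^ 2) - (a ^ 2 + b ^ 2)) < eps.
Proof.
  intros He. set (C := 2 * Rabs a + 1 + (2 * Rabs b + 1)).
  assert (HC : 0 < C) by (unfold C; assert (H := Rabs_pos a); assert (H' := Rabs_pos b); lra).
  exists (Rmin 1 (eps / (2 * C))). split; [apply Rmin_pos; [lra | apply Rdiv_lt_0_compat; lra]|].
  intros a' b' Ha Hb. set (d := Rmin 1 (eps / (2 * C))) in *.
  assert (d1 : d <= 1) by apply Rmin_l. assert (d2 : d <= eps / (2 * C)) by apply Rmin_r.
  assert (A := Rabs_sqr_sub_le a a' d d1 Ha). assert (B := Rabs_sqr_sub_le b b' d d1 Hb).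
  replace ((a' ^ 2 + b' ^ 2) - (a ^ 2 + b ^ 2)) with ((a' ^ 2 - a ^ 2) + (b' ^ 2 - b ^ 2)) by ring.
  apply Rle_lt_trans with (Rabs (a' ^ 2 - a ^ 2) + Rabs (b' ^ 2 - b ^ 2)); [apply Rabs_triang|].
  apply Rle_lt_trans with (d * C); [unfold C; lra|].
  apply Rle_lt_trans with (eps / (2 * C) * C); [apply Rmult_le_compat_r; lra|].
  replace (eps / (2 * C) * C) with (eps / 2) by (field; lra). lra.
Qed.

Lemma continuous2_comp g (psi : R -> R) : continuous2 g -> (forall x y, 0 <= g x y) ->
  (forall z, 0 <= z -> continuity_pt psi z) -> continuous2 (fun x y => psi (g x y)).
Proof.
  intros Hg Hpos Hpsi x y eps Heps.
  destruct (continuity_pt_elim (Hpsi (g x y) (Hpos x y)) eps Heps) as [d [Hd Hd']].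
  destruct (Hg x y d Hd) as [d1 [Hd1 Hd1']].
  exists d1; split; [auto|]. intros x' y' Hx Hy. apply Hd'. apply Hd1'; auto.
Qed.

Lemma continuity_pt_section g x y0 : continuous2 g -> continuity_pt (fun y => g x y) y0.
Proof.
  intros Hg. apply continuity_pt_intro. intros eps Heps.
  destruct (Hg x y0 eps Heps) as [d [Hd Hd']].
  exists d; split; auto. intros y Hy. apply Hd'; auto. rewrite Rminus_diag, Rabs_R0; auto.
Qed.

Lemma continuous2_near g x0 t eps : continuous2 g -> 0 < eps ->
  exists d, 0 < d /\ forall x y, Rabs (x - x0) < d -> Rabs (y - t) < d ->
    Rabs (g x y - g x0 y) < eps.
Proof.
  intros Hg Heps. destruct (Hg x0 t (eps / 2) ltac:(lra)) as [d [Hd Hd']].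
  exists d; split; [exact Hd|]. intros x y Hx Hy.
  assert (A := Hd' x y Hx Hy).
  assert (B := Hd' x0 y ltac:(rewrite Rminus_diag, Rabs_R0; exact Hd) Hy).
  replace (g x y - g x0 y) with ((g x y - g x0 t) - (g x0 y - g x0 t)) by ring.
  eapply Rle_lt_trans; [apply Rabs_triang|]. rewrite Rabs_Ropp; lra.
Qed.

(* Sup argument: the set of t for which one d works uniformly on [al, t] reaches be. *)
Lemma continuous2_tube g x0 al be eps : continuous2 g -> al <= be -> 0 < eps ->
  exists d, 0 < d /\ forall x y, Rabs (x - x0) < d -> al <= y <= be ->
    Rabs (g x y - g x0 y) < eps.
Proof.
  intros Hg Hab Heps.
  set (S := fun t => al <= t <= be /\ exists d, 0 < d /\ forall x y,
              Rabs (x - x0) < d -> al <= y <= t -> Rabs (g x y - g x0 y) < eps).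
  assert (Sal : S al).
  { split; [lra|]. destruct (continuous2_near g x0 al eps Hg Heps) as [d [Hd Hd']].
    exists d; split; auto. intros x y Hx Hy. apply Hd'; auto.
    replace y with al by lra. rewrite Rminus_diag, Rabs_R0; auto. }
  assert (bS : bound S) by (exists be; intros t [Ht _]; lra).
  destruct (completeness S bS (ex_intro _ al Sal)) as [ts [Hts1 Hts2]].
  assert (Hts : al <= ts <= be) by (split; [apply Hts1; auto | apply Hts2; intros t [Ht _]; lra]).
  destruct (continuous2_near g x0 ts eps Hg Heps) as [d1 [Hd1 Hnear]].
  destruct (not_upper_bound_lt S (ts - d1)) as [t1 [[Ht1 [d [Hd Hd']]] Ht1']].
  { intro Hub. specialize (Hts2 _ Hub). lra. }
  assert (Ht1ts : t1 <= ts) by (apply Hts1; split; [auto | exists d; split; auto]).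
  set (t2 := Rmin be (ts + d1 / 2)).
  assert (Ht2 : t2 <= be /\ t2 <= ts + d1 / 2 /\ (t2 = be \/ t2 = ts + d1 / 2))
    by (unfold t2, Rmin; destruct (Rle_dec be (ts + d1 / 2)); lra).
  assert (St2 : S t2).
  { split; [lra|]. exists (Rmin d d1); split; [apply Rmin_pos; auto|].
    intros x y Hx Hy. assert (M1 := Rmin_l d d1). assert (M2 := Rmin_r d d1).
    destruct (Rle_dec y t1); [apply Hd'; lra | apply Hnear; [lra | apply Rabs_def1; lra]]. }
  assert (t2 <= ts) by (apply Hts1; auto).
  assert (Et2 : t2 = be) by lra.
  destruct St2 as [_ Hunif]. rewrite <- Et2. exact Hunif.
Qed.

Lemma continuity_pt_RInt_param g al be x0 : continuous2 g -> al <= be ->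
  continuity_pt (fun x => RInt (fun y => g x y) al be) x0.
Proof.
  intros Hg Hab. apply continuity_pt_intro. intros eps Heps.
  set (e' := eps / (be - al + 1)).
  assert (He' : 0 < e') by (unfold e'; apply Rdiv_lt_0_compat; lra).
  destruct (continuous2_tube g x0 al be e' Hg Hab He') as [d [Hd Hd']].
  exists d; split; auto. intros x Hx.
  assert (ix : forall x, Riemann_integrable (fun y => g x y) al be).
  { intros; apply continuity_implies_RiemannInt; auto. intros; apply continuity_pt_section; auto. }
  replace (RInt (fun y => g x y) al be - RInt (fun y => g x0 y) al be)
    with (RInt (fun y => g x y + -1 * g x0 y) al be)
    by (rewrite (RInt_plus_scal _ _ (-1) _ _ (ix x) (ix x0)); ring).
  eapply Rle_lt_trans; [apply RInt_abs; auto; apply RiemannInt_P10; auto|].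
  eapply Rle_lt_trans.
  { apply (RInt_le _ (fun _ => e')); auto.
    - apply RiemannInt_P16. apply RiemannInt_P10; auto.
    - exact (RiemannInt_P14 al be e').
    - intros y Hy. left. replace (g x y + -1 * g x0 y) with (g x y - g x0 y) by ring.
      apply Hd'; auto; lra. }
  rewrite RInt_const. unfold e'.
  apply Rlt_le_trans with (eps / (be - al + 1) * (be - al + 1)).
  - apply Rmult_lt_compat_l; [auto | lra].
  - right; field; lra.
Qed.

Lemma Riemann_integrable_section g x a b : continuous2 g ->
  Riemann_integrable (fun y => g x y) a b.
Proof.
  intros Hg. destruct (Rle_dec a b).
  - apply continuity_implies_RiemannInt; auto; intros; apply continuity_pt_section; auto.
  - apply RiemannInt_P1, continuity_implies_RiemannInt; [lra|].
    intros; apply continuity_pt_section; auto.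
Qed.

(** * Integrals in x over an interval *)

Definition continuous_cs (g : R -> R) : Prop :=
  (forall x, continuity_pt g x) /\ has_compact_support g.

Definition integral_on (I : R -> Prop) (g : R -> R) : R := IntR (fun x => ind I x * g x).

Lemma continuous_cs_plus g1 g2 : continuous_cs g1 -> continuous_cs g2 ->
  continuous_cs (fun x => g1 x + g2 x).
Proof.
  intros [H1 s1] [H2 s2]. split; [intros x; apply continuity_pt_plus; auto|].
  destruct (has_compact_support_common g1 g2 s1 s2) as [K [HK [E1 E2]]].
  exists K; split; [exact HK|]. intros x Hx; rewrite E1, E2; auto; ring.
Qed.

Lemma continuous_cs_scal g l : continuous_cs g -> continuous_cs (fun x => l * g x).
Proof.
  intros [Hc [K [HK E]]]. split.
  - intros x. apply continuity_pt_mult; [apply continuity_pt_const; intros ? ?; auto | auto].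
  - exists K; split; [exact HK|]. intros x Hx; rewrite E; auto; ring.
Qed.

Lemma continuous_cs_rpow g a : 0 < a -> continuous_cs g -> continuous_cs (fun x => rpow (g x) a).
Proof.
  intros Ha [Hc [K [HK E]]]. split.
  - intros x. apply (continuity_pt_comp g (fun z => rpow z a));
      [apply Hc | apply continuity_pt_rpow, Ha].
  - exists K; split; [exact HK|]. intros x Hx; rewrite E, rpow_0; auto.
Qed.

Lemma integrable_cs_ind I g : is_interval I -> continuous_cs g ->
  integrable_cs (fun x => ind I x * g x).
Proof.
  intros HI Hg. split.
  - destruct Hg as [_ [K [HK E]]]. exists K; split; [exact HK|]. intros x Hx; rewrite E; auto; ring.
  - intros a b Hab; apply Riemann_integrable_ind; auto. apply Hg.
Qed.

Section IntegralOn.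
Variable I : R -> Prop.
Hypothesis HI : is_interval I.

Lemma integral_on_plus g1 g2 : continuous_cs g1 -> continuous_cs g2 ->
  integral_on I (fun x => g1 x + g2 x) = integral_on I g1 + integral_on I g2.
Proof.
  intros o1 o2. unfold integral_on. rewrite <- (Rmult_1_l (IntR (fun x => ind I x * g2 x))).
  rewrite <- IntR_plus_scal by (apply integrable_cs_ind; auto).
  f_equal. apply functional_extensionality; intros; ring.
Qed.

Lemma integral_on_scal g l : continuous_cs g ->
  integral_on I (fun x => l * g x) = l * integral_on I g.
Proof.
  intros o. unfold integral_on. rewrite <- IntR_scal by (apply integrable_cs_ind; auto).
  f_equal. apply functional_extensionality; intros; ring.
Qed.

Lemma integral_on_le g1 g2 : continuous_cs g1 -> continuous_cs g2 ->
  (forall x, g1 x <= g2 x) -> integral_on I g1 <= integral_on I g2.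
Proof.
  intros o1 o2 H. unfold integral_on.
  apply IntR_le; try (apply integrable_cs_ind; auto).
  intros x. unfold ind.
  destruct (excluded_middle_informative (I x)); [rewrite !Rmult_1_l; auto | lra].
Qed.

Lemma integral_on_ge0 g : continuous_cs g -> (forall x, 0 <= g x) -> 0 <= integral_on I g.
Proof.
  intros o H. unfold integral_on. apply IntR_ge0; [apply integrable_cs_ind; auto|].
  intros x. unfold ind.
  destruct (excluded_middle_informative (I x)); [rewrite Rmult_1_l; auto | lra].
Qed.

(* Concavity of t |-> t^r at the convex combination with weights m_i / (m1 + m2)
   of the points F_i / m_i. *)
Lemma rpow_concave_normalized r m1 m2 F1 F2 : 0 < r < 1 -> 0 < m1 -> 0 < m2 ->
  0 <= F1 -> 0 <= F2 ->
  m1 / (m1 + m2) / rpow m1 r * rpow F1 r + m2 / (m1 + m2) / rpow m2 r * rpow F2 r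
  <= / rpow (m1 + m2) r * rpow (F1 + F2) r.
Proof.
  intros Hr Hm1 Hm2 HF1 HF2. set (S := m1 + m2). set (l := m1 / S).
  assert (HS : 0 < S) by (unfold S; lra).
  assert (Hl : 0 <= l <= 1 /\ 1 - l = m2 / S).
  { unfold l; repeat split; [apply Rmult_le_pos; [lra | left; apply Rinv_0_lt_compat; lra] | |].
    - apply Rmult_le_reg_r with S; [lra|]. unfold Rdiv; rewrite Rmult_assoc, Rinv_l; unfold S; lra.
    - unfold S; field; lra. }
  assert (C := rpow_concave r l (F1 / m1) (F2 / m2) Hr (proj1 Hl)
    ltac:(apply Rmult_le_pos; [lra | left; apply Rinv_0_lt_compat; lra])
    ltac:(apply Rmult_le_pos; [lra | left; apply Rinv_0_lt_compat; lra])).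
  replace (l * (F1 / m1) + (1 - l) * (F2 / m2)) with ((F1 + F2) * / S) in C
    by (unfold l, S; field; lra).
  rewrite <- (proj2 Hl). unfold Rdiv in C |- *.
  rewrite !rpow_mul, !rpow_inv in C; try lra;
    try (left; apply Rinv_0_lt_compat; lra).
Qed.

Lemma integral_on_reverse_minkowski r F1 F2 : 0 < r < 1 ->
  continuous_cs F1 -> continuous_cs F2 -> (forall x, 0 <= F1 x) -> (forall x, 0 <= F2 x) ->
  rpow (integral_on I (fun x => rpow (F1 x) r)) (/ r)
    + rpow (integral_on I (fun x => rpow (F2 x) r)) (/ r)
  <= rpow (integral_on I (fun x => rpow (F1 x + F2 x) r)) (/ r).
Proof.
  intros Hr o1 o2 P1 P2.
  assert (Hir : 0 < / r) by (apply Rinv_0_lt_compat; lra).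
  assert (c1 := continuous_cs_rpow F1 r ltac:(lra) o1).
  assert (c2 := continuous_cs_rpow F2 r ltac:(lra) o2).
  assert (c3 := continuous_cs_rpow _ r ltac:(lra) (continuous_cs_plus F1 F2 o1 o2)).
  set (mu1 := integral_on I (fun x => rpow (F1 x) r)).
  set (mu2 := integral_on I (fun x => rpow (F2 x) r)).
  set (mu3 := integral_on I (fun x => rpow (F1 x + F2 x) r)).
  assert (M1 : 0 <= mu1) by (apply integral_on_ge0; auto; intros; apply rpow_ge0).
  assert (M2 : 0 <= mu2) by (apply integral_on_ge0; auto; intros; apply rpow_ge0).
  assert (Hle : mu1 <= mu3 /\ mu2 <= mu3).
  { split; apply integral_on_le; auto; intros x; specialize (P1 x); specialize (P2 x);
      apply rpow_le; lra. }
  destruct M1 as [M1|<-]; [| rewrite rpow_0, Rplus_0_l; apply rpow_le; lra].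
  destruct M2 as [M2|<-]; [| rewrite rpow_0, Rplus_0_r; apply rpow_le; lra].
  set (m1 := rpow mu1 (/ r)). set (m2 := rpow mu2 (/ r)).
  assert (Hm1 : 0 < m1) by (apply rpow_gt0; auto). assert (Hm2 : 0 < m2) by (apply rpow_gt0; auto).
  assert (Em1 : rpow m1 r = mu1) by (unfold m1; rewrite rpow_mult, Rinv_l, rpow_1; lra).
  assert (Em2 : rpow m2 r = mu2) by (unfold m2; rewrite rpow_mult, Rinv_l, rpow_1; lra).
  assert (HSr : 0 < rpow (m1 + m2) r) by (apply rpow_gt0; lra).
  assert (PW := fun x => rpow_concave_normalized r m1 m2 (F1 x) (F2 x) Hr Hm1 Hm2 (P1 x) (P2 x)).
  rewrite Em1, Em2 in PW.
  assert (LL : 1 <= / rpow (m1 + m2) r * mu3).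
  { replace 1 with (m1 / (m1 + m2) / mu1 * mu1 + m2 / (m1 + m2) / mu2 * mu2) by (field; lra).
    unfold mu1, mu2, mu3 in PW |- *.
    rewrite <- !integral_on_scal, <- integral_on_plus; auto; try (apply continuous_cs_scal; auto).
    apply integral_on_le; [apply continuous_cs_plus; apply continuous_cs_scal; auto
                          | apply continuous_cs_scal; auto | exact PW]. }
  assert (rpow (m1 + m2) r <= mu3).
  { apply Rmult_le_reg_l with (/ rpow (m1 + m2) r); [apply Rinv_0_lt_compat; auto|].
    rewrite Rinv_l; lra. }
  rewrite <- (rpow_rpow_inv (m1 + m2) r) by lra.
  apply rpow_le; [lra | split; [apply rpow_ge0 | auto]].
Qed.

End IntegralOn.

(** * Masses of a compactly supported density *)

Fixpoint sum_lt (f : nat -> R) (n : nat) : R :=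
  match n with O => 0 | S n' => sum_lt f n' + f n' end.

Lemma sum_lt_le f g n : (forall i, (i < n)%nat -> f i <= g i) -> sum_lt f n <= sum_lt g n.
Proof.
  induction n as [|n IHn]; simpl; intros H; [lra|].
  assert (sum_lt f n <= sum_lt g n) by (apply IHn; intros; apply H; lia).
  assert (f n <= g n) by (apply H; lia). lra.
Qed.

Lemma sum_lt_plus f g n : sum_lt (fun i => f i + g i) n = sum_lt f n + sum_lt g n.
Proof. induction n as [|n IHn]; simpl; [ring | rewrite IHn; ring]. Qed.

Lemma sum_lt_scal c f n : sum_lt (fun i => c * f i) n = c * sum_lt f n.
Proof. induction n as [|n IHn]; simpl; [ring | rewrite IHn; ring]. Qed.

Lemma sum_lt_ge0 f n : (forall i, 0 <= f i) -> 0 <= sum_lt f n.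
Proof. intros H. induction n as [|n IHn]; simpl; [lra|]. specialize (H n). lra. Qed.

Lemma sum_lt_pairs f n : sum_lt f (2 * n) = sum_lt (fun i => f (2 * i)%nat + f (S (2 * i))) n.
Proof.
  induction n as [|n IHn]; [reflexivity|].
  replace (2 * S n)%nat with (S (S (2 * n))) by lia. cbn [sum_lt]. rewrite IHn. ring.
Qed.

Lemma sum_lt_ext f g n : (forall i, (i < n)%nat -> f i = g i) -> sum_lt f n = sum_lt g n.
Proof.
  induction n as [|n IHn]; simpl; intros H; auto.
  rewrite IHn by (intros; apply H; lia). rewrite H by lia. reflexivity.
Qed.

Lemma sum_lt_rpow_le sg f n : 1 <= sg -> (forall i, 0 <= f i) ->
  sum_lt (fun i => rpow (f i) sg) n <= rpow (sum_lt f n) sg.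
Proof.
  intros Hs Hf. induction n as [|n IHn]; simpl; [rewrite rpow_0; lra|].
  eapply Rle_trans; [apply Rplus_le_compat_r; exact IHn|].
  apply rpow_superadditive; auto. apply sum_lt_ge0; auto.
Qed.

(* |f|^q0 = (|f|^2)^theta *)
Definition theta : R := q0 / 2.

Lemma theta_bounds : 0 < theta < 1.
Proof. unfold theta, q0; lra. Qed.

(* h stands for |f|^2 = u^2 + v^2, supported in [-K, K]^2. *)
Definition cs_density (h : R -> R -> R) (K : R) : Prop :=
  continuous2 h /\ (forall x y, 0 <= h x y) /\ 0 <= K /\
  (forall x y, K < Rabs x \/ K < Rabs y -> h x y = 0).

Section Density.
Variables (h : R -> R -> R) (K : R).
Hypothesis Hh : cs_density h K.

Definition slice (x a b : R) : R := RInt (fun y => h x y) a b.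
Definition slice_pow (x a b : R) : R := RInt (fun y => rpow (h x y) theta) a b.

Lemma continuous2_pow : continuous2 (fun x y => rpow (h x y) theta).
Proof.
  destruct Hh as [Hc [Hp _]]. apply (continuous2_comp h (fun z => rpow z theta)); auto.
  intros; apply continuity_pt_rpow, theta_bounds.
Qed.

Lemma slice_Chasles x a b c : slice x a b + slice x b c = slice x a c.
Proof. apply RInt_Chasles; apply (Riemann_integrable_section h), Hh. Qed.

Lemma slice_pow_Chasles x a b c : slice_pow x a b + slice_pow x b c = slice_pow x a c.
Proof.
  apply RInt_Chasles;
    apply (Riemann_integrable_section (fun x y => rpow (h x y) theta)), continuous2_pow.
Qed.

Lemma slice_ge0 x a b : a <= b -> 0 <= slice x a b.
Proof.
  intros Hab. apply RInt_ge0; [exact Hab | apply (Riemann_integrable_section h), Hh | apply Hh].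
Qed.

Lemma slice_pow_ge0 x a b : a <= b -> 0 <= slice_pow x a b.
Proof.
  intros Hab. apply RInt_ge0; [exact Hab | |].
  - apply (Riemann_integrable_section (fun x y => rpow (h x y) theta)), continuous2_pow.
  - intros; apply rpow_ge0.
Qed.

Lemma slice_mono x a' a b b' : a' <= a -> a <= b -> b <= b' -> slice x a b <= slice x a' b'.
Proof.
  intros H1 H2 H3. rewrite <- (slice_Chasles x a' a b'), <- (slice_Chasles x a b b').
  assert (0 <= slice x a' a) by (apply slice_ge0; lra).
  assert (0 <= slice x b b') by (apply slice_ge0; lra). lra.
Qed.

Lemma slice_outside x a b : a <= - (K + 1) -> K + 1 <= b ->
  slice x a b = slice x (- (K + 1)) (K + 1).
Proof.
  intros Ha Hb. destruct Hh as [_ [_ [HK Hs]]].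
  rewrite <- (slice_Chasles x a (- (K + 1)) b), <- (slice_Chasles x (- (K + 1)) (K + 1) b).
  unfold slice. rewrite (RInt_null_inside _ a), (RInt_null_inside _ (K + 1)); try lra;
    intros y Hy; apply Hs; right; unfold Rabs; destruct (Rcase_abs y); lra.
Qed.

Lemma continuous_cs_slice_gen (g : R -> R -> R) a b : continuous2 g -> a <= b ->
  (forall x y, K < Rabs x -> g x y = 0) -> continuous_cs (fun x => RInt (fun y => g x y) a b).
Proof.
  intros Hg Hab Hs. split; [intros x; apply continuity_pt_RInt_param; auto|].
  exists (K + 1); split; [destruct Hh as [_ [_ [HK _]]]; lra|].
  intros x Hx. rewrite (RInt_null_inside _ a b); auto. intros y _. apply Hs; lra.
Qed.

Lemma continuous_cs_slice a b : a <= b -> continuous_cs (fun x => slice x a b).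
Proof.
  intros Hab. apply continuous_cs_slice_gen; [apply Hh | exact Hab|].
  intros x y Hx. apply Hh. left; exact Hx.
Qed.

Lemma continuous_cs_slice_pow a b : a <= b -> continuous_cs (fun x => slice_pow x a b).
Proof.
  intros Hab. apply continuous_cs_slice_gen; [apply continuous2_pow | exact Hab|].
  intros x y Hx. rewrite (proj2 (proj2 (proj2 Hh)) x y); [apply rpow_0 | left; exact Hx].
Qed.

Lemma slice_pow_holder x a b : a < b ->
  slice_pow x a b <= rpow (b - a) (1 - theta) * rpow (slice x a b) theta.
Proof.
  intros Hab. assert (Ht := theta_bounds).
  apply rpow_young_optimize; [exact Ht | apply slice_pow_ge0; lra | apply slice_ge0; lra | lra |].
  intros lam Hlam. unfold slice_pow, slice.
  assert (iP : Riemann_integrable (fun y => rpow (h x y) theta) a b)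
    by (apply (Riemann_integrable_section (fun x y => rpow (h x y) theta)), continuous2_pow).
  assert (iH : Riemann_integrable (fun y => h x y) a b)
    by (apply (Riemann_integrable_section h), Hh).
  assert (iC : Riemann_integrable (fun _ => (1 - theta) * lam) a b)
    by exact (RiemannInt_P14 a b ((1 - theta) * lam)).
  assert (Hle : RInt (fun y => rpow lam (1 - theta) * rpow (h x y) theta) a b
                <= RInt (fun y => (1 - theta) * lam + theta * h x y) a b).
  { apply RInt_le; [lra | apply Riemann_integrable_scal, iP | exact (RiemannInt_P10 theta iC iH) |].
    intros y _.
    assert (Y := rpow_young theta (h x y) lam Ht (proj1 (proj2 Hh) x y) (Rlt_le _ _ Hlam)).
    lra. }
  rewrite (RInt_scal _ _ _ _ iP), (RInt_plus_scal _ _ _ _ _ iC iH), RInt_const in Hle. lra.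
Qed.

Variable I : R -> Prop.
Hypothesis HI : is_interval I.

(* For f with |f|^2 = h: the q0-th powers of ||f 1_{I x [a,b]}||_{L^q0} and of
   ||f 1_{I x [a,b]}||_{L^q0_x L^2_y}, and the former rescaled by (b - a)^(theta - 1). *)
Definition strip_mass (a b : R) : R := integral_on I (fun x => slice_pow x a b).
Definition mixed_mass (a b : R) : R := integral_on I (fun x => rpow (slice x a b) theta).
Definition scaled_mass (a b : R) : R := rpow (b - a) (theta - 1) * strip_mass a b.

Lemma continuous_cs_slice_rpow a b : a <= b -> continuous_cs (fun x => rpow (slice x a b) theta).
Proof.
  intros Hab. apply continuous_cs_rpow; [apply theta_bounds | apply continuous_cs_slice, Hab].
Qed.

Lemma strip_mass_Chasles a b c : a <= b -> b <= c ->
  strip_mass a c = strip_mass a b + strip_mass b c.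
Proof.
  intros Hab Hbc. unfold strip_mass. rewrite <- integral_on_plus; auto;
    try (apply continuous_cs_slice_pow; lra).
  f_equal. apply functional_extensionality; intros x. symmetry; apply slice_pow_Chasles.
Qed.

Lemma strip_mass_ge0 a b : a <= b -> 0 <= strip_mass a b.
Proof.
  intros Hab. apply integral_on_ge0; auto; [apply continuous_cs_slice_pow, Hab|].
  intros; apply slice_pow_ge0, Hab.
Qed.

Lemma scaled_mass_ge0 a b : a <= b -> 0 <= scaled_mass a b.
Proof. intros Hab. apply Rmult_le_pos; [apply rpow_ge0 | apply strip_mass_ge0, Hab]. Qed.

Lemma mixed_mass_ge0 a b : a <= b -> 0 <= mixed_mass a b.
Proof.
  intros Hab. apply integral_on_ge0; auto; [apply continuous_cs_slice_rpow, Hab|].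
  intros; apply rpow_ge0.
Qed.

Lemma scaled_mass_le_mixed_mass a b : a < b -> scaled_mass a b <= mixed_mass a b.
Proof.
  intros Hab. unfold scaled_mass, strip_mass, mixed_mass.
  assert (Hp : 0 < rpow (b - a) (theta - 1)) by (apply rpow_gt0; lra).
  assert (E : rpow (b - a) (theta - 1) * rpow (b - a) (1 - theta) = 1).
  { rewrite <- rpow_plus by lra. replace (theta - 1 + (1 - theta)) with 0 by ring.
    rewrite rpow_pos; [apply Rpower_O | ..]; lra. }
  apply Rle_trans with (rpow (b - a) (theta - 1) *
    (rpow (b - a) (1 - theta) * integral_on I (fun x => rpow (slice x a b) theta)));
    [apply Rmult_le_compat_l; [lra|] | rewrite <- Rmult_assoc, E; lra].
  rewrite <- integral_on_scal; auto; [| apply continuous_cs_slice_rpow; lra].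
  apply integral_on_le; auto; [apply continuous_cs_slice_pow; lra | |].
  - apply continuous_cs_scal, continuous_cs_slice_rpow; lra.
  - intros x. apply slice_pow_holder, Hab.
Qed.

Lemma mixed_mass_mono a' a b b' : a' <= a -> a <= b -> b <= b' ->
  mixed_mass a b <= mixed_mass a' b'.
Proof.
  intros H1 H2 H3. apply integral_on_le; auto; try (apply continuous_cs_slice_rpow; lra).
  intros x. apply rpow_le; [left; apply theta_bounds|].
  split; [apply slice_ge0, H2 | apply slice_mono; auto].
Qed.

Lemma mixed_mass_superadditive a b c : a <= b -> b <= c ->
  rpow (mixed_mass a b) (/ theta) + rpow (mixed_mass b c) (/ theta)
  <= rpow (mixed_mass a c) (/ theta).
Proof.
  intros Hab Hbc. unfold mixed_mass.
  replace (fun x => rpow (slice x a c) theta)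
    with (fun x => rpow (slice x a b + slice x b c) theta)
    by (apply functional_extensionality; intros; rewrite slice_Chasles; auto).
  apply integral_on_reverse_minkowski; auto using theta_bounds, continuous_cs_slice;
    intros; apply slice_ge0; auto.
Qed.

Lemma scaled_mass_halves a l : 0 < l ->
  scaled_mass a (a + l + l)
  = rpow 2 (theta - 1) * (scaled_mass a (a + l) + scaled_mass (a + l) (a + l + l)).
Proof.
  intros Hl. unfold scaled_mass.
  rewrite (strip_mass_Chasles a (a + l)) by lra.
  replace (a + l + l - a) with (2 * l) by ring.
  replace (a + l - a) with l by ring. replace (a + l + l - (a + l)) with l by ring.
  rewrite rpow_mul; [ring | lra | lra].
Qed.

Lemma mixed_mass_outside a b : a <= - (K + 1) -> K + 1 <= b ->
  mixed_mass a b = mixed_mass (- (K + 1)) (K + 1).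
Proof.
  intros Ha Hb. unfold mixed_mass. f_equal. apply functional_extensionality; intros x.
  rewrite slice_outside; auto.
Qed.

Lemma mixed_mass_chain (t : nat -> R) n : (forall i, t i <= t (S i)) ->
  sum_lt (fun i => rpow (mixed_mass (t i) (t (S i))) (/ theta)) n
  <= rpow (mixed_mass (t 0%nat) (t n)) (/ theta).
Proof.
  intros Ht. induction n as [|n IHn]; [apply rpow_ge0|].
  simpl. eapply Rle_trans; [apply Rplus_le_compat_r; exact IHn|].
  apply mixed_mass_superadditive; [| apply Ht].
  clear IHn; induction n; [lra | specialize (Ht n); lra].
Qed.

End Density.

(** * A potential inequality on the dyadic tree *)

Section DyadicTree.
Variables g s sg ro : R.
Hypotheses (Hg : 0 < g < 1) (Hs : 1 <= s) (Hsg : 1 < sg) (Hro : 0 < ro) (Hrs : ro * sg = s).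

Definition threshold : R := (1 - g) / 2.
Definition kappa : R := g * (1 + threshold).
Definition weight_B : R := kappa / (1 - kappa).
Definition weight_A : R := (1 + weight_B) * (1 + rpow 2 s / ((sg - 1) * rpow threshold s)).

Lemma threshold_bounds : 0 < threshold < 1.
Proof. unfold threshold; lra. Qed.

Lemma kappa_bounds : 0 < kappa < 1.
Proof. unfold kappa, threshold; split; nra. Qed.

Lemma weight_B_pos : 0 < weight_B.
Proof. assert (K := kappa_bounds). apply Rdiv_lt_0_compat; lra. Qed.

Lemma weight_B_kappa : (1 + weight_B) * kappa = weight_B.
Proof. assert (K := kappa_bounds). unfold weight_B. field. lra. Qed.

Lemma weight_A_ge : 1 + weight_B <= weight_A.
Proof.
  assert (B := weight_B_pos). assert (T := threshold_bounds).
  assert (0 < rpow threshold s) by (apply rpow_gt0; lra).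
  assert (0 < rpow 2 s) by (apply rpow_gt0; lra).
  assert (0 <= rpow 2 s / ((sg - 1) * rpow threshold s)) by (left; apply Rdiv_lt_0_compat; nra).
  unfold weight_A. nra.
Qed.

Lemma weight_A_threshold :
  weight_A * ((sg - 1) * rpow threshold s)
  = (1 + weight_B) * ((sg - 1) * rpow threshold s + rpow 2 s).
Proof.
  assert (T := threshold_bounds). assert (0 < rpow threshold s) by (apply rpow_gt0; lra).
  unfold weight_A. field. split; lra.
Qed.

(* A child much smaller than its sibling: then a <= kappa a1 and the B-terms alone pay. *)
Lemma defect_unbalanced a a1 a2 : 0 <= a2 <= threshold * a1 -> 0 <= a <= g * (a1 + a2) ->
  (1 + weight_B) * rpow a s - weight_B * rpow a1 s - weight_B * rpow a2 s <= 0.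
Proof.
  intros Ha2 Ha. assert (T := threshold_bounds). assert (K := kappa_bounds).
  assert (HB := weight_B_pos). assert (0 <= rpow a2 s) by apply rpow_ge0.
  assert (a <= kappa * a1) by (unfold kappa; nra).
  assert (rpow a s <= kappa * rpow a1 s).
  { apply Rle_trans with (rpow (kappa * a1) s); [apply rpow_le; lra|].
    rewrite rpow_mul by nra. apply Rmult_le_compat_r; [apply rpow_ge0 | apply rpow_le_self; lra]. }
  assert (E := weight_B_kappa).
  assert (Hle : (1 + weight_B) * rpow a s <= (1 + weight_B) * kappa * rpow a1 s).
  { rewrite Rmult_assoc. apply Rmult_le_compat_l; lra. }
  rewrite E in Hle. assert (0 <= weight_B * rpow a2 s) by (apply Rmult_le_pos; lra). lra.
Qed.

(* Comparable children: the superadditivity gap of x ↦ x^sg pays. *)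
Lemma defect_balanced a a1 a2 X1 X2 : threshold * a1 <= a2 <= a1 -> 0 <= a <= g * (a1 + a2) ->
  rpow a1 ro <= X1 -> rpow a2 ro <= X2 ->
  (1 + weight_B) * rpow a s <= weight_A * (rpow (X1 + X2) sg - rpow X1 sg - rpow X2 sg).
Proof.
  intros Ha2 Ha HX1 HX2. assert (T := threshold_bounds). assert (HB := weight_B_pos).
  assert (Ha1 : 0 <= a1) by nra.
  assert (A2 : rpow a s <= rpow 2 s * rpow a1 s) by (rewrite <- rpow_mul; [apply rpow_le|..]; nra).
  assert (L1 : rpow (threshold * a1) ro <= Rmin X1 X2).
  { apply Rmin_glb; eapply Rle_trans; eauto; apply rpow_le; nra. }
  assert (L2 : (sg - 1) * rpow (Rmin X1 X2) sg <= rpow (X1 + X2) sg - rpow X1 sg - rpow X2 sg).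
  { assert (0 <= rpow a1 ro) by apply rpow_ge0. assert (0 <= rpow a2 ro) by apply rpow_ge0.
    unfold Rmin. destruct (Rle_dec X1 X2).
    - rewrite Rplus_comm. assert (Hgap := rpow_superadditive_gap sg X2 X1). lra.
    - assert (Hgap := rpow_superadditive_gap sg X1 X2). lra. }
  assert (L3 : rpow threshold s * rpow a1 s <= rpow (Rmin X1 X2) sg).
  { rewrite <- rpow_mul, <- Hrs, <- rpow_mult by nra.
    apply rpow_le; [lra | split; [apply rpow_ge0 | auto]]. }
  assert (0 < rpow threshold s) by (apply rpow_gt0; lra).
  assert (0 < rpow 2 s) by (apply rpow_gt0; lra).
  assert (0 <= rpow a1 s) by apply rpow_ge0.
  assert (AE := weight_A_threshold). assert (HA := weight_A_ge).
  apply Rle_trans with (weight_A * ((sg - 1) * (rpow threshold s * rpow a1 s))).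
  2:{ apply Rmult_le_compat_l; [lra|].
      apply Rle_trans with ((sg - 1) * rpow (Rmin X1 X2) sg); [|exact L2].
      apply Rmult_le_compat_l; lra. }
  replace (weight_A * ((sg - 1) * (rpow threshold s * rpow a1 s)))
    with ((1 + weight_B) * ((sg - 1) * rpow threshold s + rpow 2 s) * rpow a1 s)
    by (rewrite <- AE; ring).
  assert (0 <= (sg - 1) * rpow threshold s * rpow a1 s) by (apply Rmult_le_pos; nra).
  nra.
Qed.

Definition potential (a m : R) : R := weight_A * rpow m s - weight_B * rpow a s.

Lemma potential_step_ordered a a1 a2 m m1 m2 : 0 <= a2 <= a1 -> a1 <= m1 -> a2 <= m2 ->
  0 <= a <= g * (a1 + a2) -> 0 <= m -> rpow m1 ro + rpow m2 ro <= rpow m ro ->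
  rpow a s + potential a1 m1 + potential a2 m2 <= potential a m.
Proof.
  intros Ha21 Ham1 Ham2 Ha Hm0 Hsup. unfold potential.
  set (X1 := rpow m1 ro). set (X2 := rpow m2 ro).
  assert (E : forall x, 0 <= x -> rpow x s = rpow (rpow x ro) sg)
    by (intros; rewrite rpow_mult, Hrs; auto).
  rewrite (E m1), (E m2), (E m) by lra. fold X1 X2 in Hsup |- *.
  assert (HX1 : 0 <= X1) by apply rpow_ge0. assert (HX2 : 0 <= X2) by apply rpow_ge0.
  assert (Hm : rpow (X1 + X2) sg <= rpow (rpow m ro) sg) by (apply rpow_le; lra).
  assert (HG := rpow_superadditive sg X1 X2 ltac:(lra) HX1 HX2).
  assert (HA : 0 < weight_A) by (assert (H := weight_A_ge); assert (H' := weight_B_pos); lra).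
  assert (Hdef : (1 + weight_B) * rpow a s - weight_B * rpow a1 s - weight_B * rpow a2 s
                 <= weight_A * (rpow (X1 + X2) sg - rpow X1 sg - rpow X2 sg)).
  { destruct (Rle_dec a2 (threshold * a1)).
    - assert (Hd := defect_unbalanced a a1 a2 ltac:(lra) Ha). nra.
    - assert (0 <= rpow a1 s) by apply rpow_ge0. assert (0 <= rpow a2 s) by apply rpow_ge0.
      assert (Hd := defect_balanced a a1 a2 X1 X2 ltac:(lra) Ha
        ltac:(apply rpow_le; lra) ltac:(apply rpow_le; lra)).
      assert (0 < weight_B) by apply weight_B_pos. nra. }
  nra.
Qed.

Lemma potential_step a a1 a2 m m1 m2 : 0 <= a1 -> 0 <= a2 -> a1 <= m1 -> a2 <= m2 ->
  0 <= a <= g * (a1 + a2) -> 0 <= m -> rpow m1 ro + rpow m2 ro <= rpow m ro ->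
  rpow a s + potential a1 m1 + potential a2 m2 <= potential a m.
Proof.
  intros. destruct (Rle_dec a2 a1).
  - apply potential_step_ordered; auto; lra.
  - assert (H' := potential_step_ordered a a2 a1 m m2 m1 ltac:(lra) ltac:(auto) ltac:(auto)
      ltac:(lra) H4 ltac:(lra)). lra.
Qed.

Lemma potential_ge a m : 0 <= a <= m -> rpow a s <= potential a m.
Proof.
  intros Ham. assert (HB := weight_B_pos). assert (HA := weight_A_ge).
  assert (rpow a s <= rpow m s) by (apply rpow_le; lra).
  assert (0 <= rpow a s) by apply rpow_ge0. unfold potential. nra.
Qed.

Variables (A Mu : Z -> Z -> R) (K0 : Z) (N : nat).
Hypothesis HA : forall k m, 0 <= A k m <= Mu k m.
Hypothesis Hsplit : forall k m, A k m <= g * (A (k - 1)%Z (2 * m)%Z + A (k - 1)%Z (2 * m + 1)%Z).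
Hypothesis Hsuper : forall k m,
  rpow (Mu (k - 1)%Z (2 * m)%Z) ro + rpow (Mu (k - 1)%Z (2 * m + 1)%Z) ro <= rpow (Mu k m) ro.

(* The j-th level: scale K0 - j, positions -N 2^j <= m < N 2^j. *)
Definition level (F : Z -> Z -> R) (j : nat) : R :=
  sum_lt (fun i => F (K0 - Z.of_nat j)%Z (Z.of_nat i - Z.of_nat (N * 2 ^ j))%Z) (2 * (N * 2 ^ j)).

Lemma level_step j :
  level (fun k m => rpow (A k m) s) j + level (fun k m => potential (A k m) (Mu k m)) (S j)
  <= level (fun k m => potential (A k m) (Mu k m)) j.
Proof.
  unfold level. replace (2 * (N * 2 ^ S j))%nat with (2 * (2 * (N * 2 ^ j)))%nat by (simpl; lia).
  rewrite (sum_lt_pairs _ (2 * (N * 2 ^ j))), <- sum_lt_plus. apply sum_lt_le. intros i Hi.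
  set (k := (K0 - Z.of_nat j)%Z). set (m := (Z.of_nat i - Z.of_nat (N * 2 ^ j))%Z).
  replace (K0 - Z.of_nat (S j))%Z with (k - 1)%Z by (unfold k; lia).
  replace (N * 2 ^ S j)%nat with (2 * (N * 2 ^ j))%nat by (simpl; lia).
  replace (Z.of_nat (2 * i) - Z.of_nat (2 * (N * 2 ^ j)))%Z with (2 * m)%Z by (unfold m; lia).
  replace (Z.of_nat (S (2 * i)) - Z.of_nat (2 * (N * 2 ^ j)))%Z with (2 * m + 1)%Z
    by (unfold m; lia).
  assert (H := potential_step (A k m) (A (k - 1)%Z (2 * m)%Z) (A (k - 1)%Z (2 * m + 1)%Z)
    (Mu k m) (Mu (k - 1)%Z (2 * m)%Z) (Mu (k - 1)%Z (2 * m + 1)%Z)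
    (proj1 (HA _ _)) (proj1 (HA _ _)) (proj2 (HA _ _)) (proj2 (HA _ _))
    (conj (proj1 (HA _ _)) (Hsplit k m)) (Rle_trans _ _ _ (proj1 (HA k m)) (proj2 (HA k m)))
    (Hsuper k m)).
  lra.
Qed.

Lemma levels_telescope D :
  sum_lt (level (fun k m => rpow (A k m) s)) (S D)
  <= level (fun k m => potential (A k m) (Mu k m)) 0.
Proof.
  assert (P0 : forall j, 0 <= level (fun k m => potential (A k m) (Mu k m)) j).
  { intros j. apply sum_lt_ge0. intros i.
    eapply Rle_trans; [apply rpow_ge0 | apply potential_ge, HA]. }
  assert (T : forall d, sum_lt (level (fun k m => rpow (A k m) s)) d
      + level (fun k m => potential (A k m) (Mu k m)) d
      <= level (fun k m => potential (A k m) (Mu k m)) 0).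
  { induction d as [|d IHd]; simpl; [lra|]. assert (H := level_step d). lra. }
  specialize (T (S D)). specialize (P0 (S D)). lra.
Qed.

Lemma level_0 F :
  level F 0 = sum_lt (fun i => F K0 (Z.of_nat i - Z.of_nat N)%Z) (2 * N).
Proof.
  unfold level. rewrite Nat.pow_0_r, Nat.mul_1_r.
  apply sum_lt_ext. intros i _. f_equal; lia.
Qed.

Lemma dyadic_tree_sum_le D Mtot : 0 <= Mtot ->
  level (fun k m => rpow (Mu k m) ro) 0 <= rpow Mtot ro ->
  sum_lt (level (fun k m => rpow (A k m) s)) (S D) <= weight_A * rpow Mtot s.
Proof.
  intros HM Hroot. eapply Rle_trans; [apply levels_telescope|].
  assert (HAp : 0 < weight_A) by (assert (H := weight_A_ge); assert (H' := weight_B_pos); lra).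
  rewrite level_0 in *.
  apply Rle_trans with
    (weight_A * sum_lt (fun i => rpow (rpow (Mu K0 (Z.of_nat i - Z.of_nat N)%Z) ro) sg) (2 * N)).
  { rewrite <- sum_lt_scal. apply sum_lt_le. intros i _. unfold potential.
    rewrite rpow_mult, Hrs by (eapply Rle_trans; apply HA).
    assert (0 <= rpow (A K0 (Z.of_nat i - Z.of_nat N)%Z) s) by apply rpow_ge0.
    assert (0 < weight_B) by apply weight_B_pos. nra. }
  apply Rmult_le_compat_l; [lra|].
  eapply Rle_trans; [apply sum_lt_rpow_le; [lra | intros; apply rpow_ge0]|].
  rewrite <- Hrs, <- rpow_mult by exact HM.
  apply rpow_le; [lra|]. split; [apply sum_lt_ge0; intros; apply rpow_ge0 | exact Hroot].
Qed.

End DyadicTree.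

Definition sum_list {T} (F : T -> R) (l : list T) : R := fold_right Rplus 0 (map F l).

Lemma sum_list_app {T} (F : T -> R) l1 l2 : sum_list F (l1 ++ l2) = sum_list F l1 + sum_list F l2.
Proof. unfold sum_list. induction l1 as [|a l1 IH]; simpl; [ring | rewrite IH; ring]. Qed.

Lemma sum_list_map {T U} (F : U -> R) (G : T -> U) l :
  sum_list F (map G l) = sum_list (fun x => F (G x)) l.
Proof. unfold sum_list. rewrite map_map. reflexivity. Qed.

Lemma sum_list_seq f n : sum_list f (seq 0 n) = sum_lt f n.
Proof.
  induction n as [|n IHn]; [reflexivity|].
  rewrite seq_S, sum_list_app, IHn. unfold sum_list; simpl. ring.
Qed.

Lemma sum_list_flat_map {T U} (F : U -> R) (G : T -> list U) l :
  sum_list F (flat_map G l) = sum_list (fun x => sum_list F (G x)) l.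
Proof. induction l as [|a l IH]; [reflexivity|]. simpl. rewrite sum_list_app, IH. reflexivity. Qed.

Lemma sum_list_le {T} (F G : T -> R) l :
  (forall x, In x l -> F x <= G x) -> sum_list F l <= sum_list G l.
Proof.
  induction l as [|a l IH]; intros H; unfold sum_list; simpl; [lra|].
  assert (F a <= G a) by (apply H; left; auto).
  assert (sum_list F l <= sum_list G l) by (apply IH; intros; apply H; right; auto).
  unfold sum_list in *. lra.
Qed.

Lemma sum_list_plus {T} (F G : T -> R) l :
  sum_list (fun x => F x + G x) l = sum_list F l + sum_list G l.
Proof. unfold sum_list. induction l as [|a l IH]; simpl; [ring | rewrite IH; ring]. Qed.

Lemma sum_list_scal {T} c (F : T -> R) l : sum_list (fun x => c * F x) l = c * sum_list F l.
Proof. unfold sum_list. induction l as [|a l IH]; simpl; [ring | rewrite IH; ring]. Qed.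

Lemma sum_list_ge0 {T} (F : T -> R) l : (forall x, 0 <= F x) -> 0 <= sum_list F l.
Proof.
  intros H. unfold sum_list. induction l as [|a l IH]; simpl; [lra | specialize (H a); lra].
Qed.

Lemma sum_list_incl {T} (F : T -> R) (L B : list T) : NoDup L -> incl L B ->
  (forall x, 0 <= F x) -> sum_list F L <= sum_list F B.
Proof.
  intros HN. revert B. induction HN as [|a L Ha HN IH]; intros B HB HF.
  - apply sum_list_ge0; auto.
  - destruct (in_split a B) as [B1 [B2 ->]]; [apply HB; left; auto|].
    assert (sum_list F L <= sum_list F (B1 ++ B2)).
    { apply IH; auto. intros x Hx.
      destruct (in_app_or B1 (a :: B2) x (HB x (or_intror Hx))) as [H|[H|H]];
        [apply in_or_app; auto | subst; contradiction | apply in_or_app; auto]. }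
    rewrite sum_list_app in *. unfold sum_list in *; simpl. lra.
Qed.

Definition dyadic_box (K0 : Z) (N D : nat) : list (Z * Z) :=
  flat_map (fun j => map (fun i => (K0 - Z.of_nat j, Z.of_nat i - Z.of_nat (N * 2 ^ j))%Z)
                         (seq 0 (2 * (N * 2 ^ j))))
           (seq 0 (S D)).

Lemma in_dyadic_box K0 N D k m : (K0 - Z.of_nat D <= k <= K0)%Z ->
  (- Z.of_nat N <= m <= Z.of_nat N - 1)%Z -> In (k, m) (dyadic_box K0 N D).
Proof.
  intros Hk Hm. apply in_flat_map. exists (Z.to_nat (K0 - k)). split; [apply in_seq; lia|].
  apply in_map_iff. set (j := Z.to_nat (K0 - k)).
  assert (HX : (N <= N * 2 ^ j)%nat) by (assert (H := Nat.pow_le_mono_r 2 0 j); simpl in H; nia).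
  set (X := (N * 2 ^ j)%nat) in *.
  exists (Z.to_nat (m + Z.of_nat X)). split.
  - f_equal; [unfold j; lia | clearbody X; lia].
  - apply in_seq. lia.
Qed.

Lemma sum_list_dyadic_box F K0 N D :
  sum_list F (dyadic_box K0 N D) = sum_lt (level K0 N (fun k m => F (k, m))) (S D).
Proof.
  unfold dyadic_box. rewrite sum_list_flat_map, sum_list_seq.
  apply sum_lt_ext. intros j _. rewrite sum_list_map, sum_list_seq. reflexivity.
Qed.

Lemma list_in_dyadic_box (L : list (Z * Z)) : exists K0 Kmin (N : nat), (1 <= N)%nat /\
  forall k n, In (k, n) L -> (Kmin <= k <= K0)%Z /\ (- Z.of_nat N + 1 <= n <= Z.of_nat N - 1)%Z.
Proof.
  induction L as [|[k n] L IH].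
  - exists 0%Z, 0%Z, 1%nat. split; [lia|]. intros k n [].
  - destruct IH as [K0 [Kmin [N [HN H]]]].
    exists (Z.max K0 k), (Z.min Kmin k), (N + Z.to_nat (Z.abs n) + 1)%nat. split; [lia|].
    intros k' n' [E|Hin]; [inversion E; subst; lia | destruct (H k' n' Hin); lia].
Qed.

Lemma sum_list_ext {T} (F G : T -> R) l : (forall x, F x = G x) -> sum_list F l = sum_list G l.
Proof. intros H. unfold sum_list. f_equal. apply map_ext, H. Qed.

(** * Dyadic cells *)

Definition halving_factor : R := rpow 2 (theta - 1).

Lemma halving_factor_bounds : 0 < halving_factor < 1.
Proof.
  split; [apply rpow_gt0; lra|].
  unfold halving_factor. rewrite rpow_pos by lra. unfold Rpower.
  apply Rlt_le_trans with (exp 0); [apply exp_increasing | rewrite exp_0; lra].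
  assert (Ht := theta_bounds). assert (0 < ln 2) by (rewrite <- ln_1; apply ln_increasing; lra).
  nra.
Qed.

Definition dyadic_constant (p : R) : R :=
  rpow 2 (p / q0) * 2 * weight_A halving_factor (p / q0) (p / 2).

Lemma dyadic_constant_pos p : 2 < p -> 0 < dyadic_constant p.
Proof.
  intros Hp. assert (Hg := halving_factor_bounds).
  assert (H1 := weight_A_ge halving_factor (p / q0) (p / 2) Hg).
  assert (H2 := weight_B_pos halving_factor Hg).
  assert (0 < rpow 2 (p / q0)) by (apply rpow_gt0; lra).
  unfold dyadic_constant. nra.
Qed.

Definition dyadic_point (k m : Z) : R := powerRZ 2 k * IZR m.

Lemma powerRZ_2_pred k : powerRZ 2 k = 2 * powerRZ 2 (k - 1).
Proof. replace k with ((k - 1) + 1)%Z at 1 by lia. rewrite powerRZ_add by lra. simpl. ring. Qed.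

Lemma dyadic_point_succ k m : dyadic_point k (m + 1) = dyadic_point k m + powerRZ 2 k.
Proof. unfold dyadic_point. rewrite plus_IZR. ring. Qed.

Lemma dyadic_point_even k m : dyadic_point (k - 1) (2 * m) = dyadic_point k m.
Proof. unfold dyadic_point. rewrite (powerRZ_2_pred k), mult_IZR. simpl. ring. Qed.

Lemma dyadic_point_odd k m :
  dyadic_point (k - 1) (2 * m + 1) = dyadic_point k m + powerRZ 2 (k - 1).
Proof. rewrite dyadic_point_succ, dyadic_point_even. reflexivity. Qed.

Lemma dyadic_point_lt k m : dyadic_point k m < dyadic_point k (m + 1).
Proof. rewrite dyadic_point_succ. assert (H := powerRZ_lt 2 k ltac:(lra)). lra. Qed.

Section DyadicCells.
Variables (h : R -> R -> R) (K : R) (I : R -> Prop).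
Hypotheses (Hh : cs_density h K) (HI : is_interval I).

Definition cell_scaled (k m : Z) : R :=
  scaled_mass h I (dyadic_point k m) (dyadic_point k (m + 1)).
Definition cell_mixed (k m : Z) : R :=
  mixed_mass h I (dyadic_point k m) (dyadic_point k (m + 1)).

Lemma cell_scaled_bounds k m : 0 <= cell_scaled k m <= cell_mixed k m.
Proof.
  assert (H := dyadic_point_lt k m). split.
  - apply (scaled_mass_ge0 h K Hh I HI); lra.
  - apply (scaled_mass_le_mixed_mass h K Hh I HI), H.
Qed.

Lemma cell_scaled_split k m :
  cell_scaled k m
  = halving_factor * (cell_scaled (k - 1) (2 * m) + cell_scaled (k - 1) (2 * m + 1)).
Proof.
  unfold cell_scaled. replace (2 * m + 1 + 1)%Z with (2 * (m + 1))%Z by lia.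
  rewrite dyadic_point_odd, !dyadic_point_even, dyadic_point_succ, (powerRZ_2_pred k).
  replace (dyadic_point k m + 2 * powerRZ 2 (k - 1))
    with (dyadic_point k m + powerRZ 2 (k - 1) + powerRZ 2 (k - 1)) by ring.
  apply (scaled_mass_halves h K Hh I HI), powerRZ_lt; lra.
Qed.

Lemma cell_mixed_superadditive k m :
  rpow (cell_mixed (k - 1) (2 * m)) (/ theta) + rpow (cell_mixed (k - 1) (2 * m + 1)) (/ theta)
  <= rpow (cell_mixed k m) (/ theta).
Proof.
  unfold cell_mixed. replace (2 * m + 1 + 1)%Z with (2 * (m + 1))%Z by lia.
  rewrite !dyadic_point_even, dyadic_point_odd.
  assert (H := powerRZ_lt 2 (k - 1) ltac:(lra)).
  apply (mixed_mass_superadditive h K Hh I HI); [lra|].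
  rewrite dyadic_point_succ, (powerRZ_2_pred k). lra.
Qed.

Lemma cell_mixed_root K0 N :
  level K0 N (fun k m => rpow (cell_mixed k m) (/ theta)) 0
  <= rpow (mixed_mass h I (- (K + 1)) (K + 1)) (/ theta).
Proof.
  rewrite level_0.
  set (t := fun i : nat => dyadic_point K0 (Z.of_nat i - Z.of_nat N)).
  assert (Ht : forall i, t i <= t (S i)).
  { intros i. unfold t.
    replace (Z.of_nat (S i) - Z.of_nat N)%Z with ((Z.of_nat i - Z.of_nat N) + 1)%Z by lia.
    left; apply dyadic_point_lt. }
  assert (Hmono : forall n, t 0%nat <= t n) by (induction n; [lra | specialize (Ht n); lra]).
  apply Rle_trans with (sum_lt (fun i => rpow (mixed_mass h I (t i) (t (S i))) (/ theta)) (2 * N)).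
  { right. apply sum_lt_ext. intros i _. unfold cell_mixed, t.
    replace (Z.of_nat (S i) - Z.of_nat N)%Z with ((Z.of_nat i - Z.of_nat N) + 1)%Z by lia.
    reflexivity. }
  eapply Rle_trans; [apply (mixed_mass_chain h K Hh I HI), Ht|].
  apply rpow_le; [left; apply Rinv_0_lt_compat, theta_bounds|].
  split; [apply (mixed_mass_ge0 h K Hh I HI), Hmono|].
  rewrite <- (mixed_mass_outside h K Hh I (Rmin (t 0%nat) (- (K + 1)))
                                         (Rmax (t (2 * N)%nat) (K + 1)));
    [| apply Rmin_r | apply Rmax_r].
  apply (mixed_mass_mono h K Hh I HI); [apply Rmin_l | apply Hmono | apply Rmax_l].
Qed.

Lemma scaled_mass_double_le s k n : 0 <= s ->
  rpow (scaled_mass h I (powerRZ 2 k * (IZR n - 1)) (powerRZ 2 k * (IZR n + 1))) s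
  <= rpow 2 s * (rpow (cell_scaled k (n - 1)) s + rpow (cell_scaled k n) s).
Proof.
  intros Hs. assert (Hg := halving_factor_bounds).
  assert (H1 := cell_scaled_bounds k (n - 1)). assert (H2 := cell_scaled_bounds k n).
  assert (E : scaled_mass h I (powerRZ 2 k * (IZR n - 1)) (powerRZ 2 k * (IZR n + 1))
              = halving_factor * (cell_scaled k (n - 1) + cell_scaled k n)).
  { unfold cell_scaled. replace (n - 1 + 1)%Z with n by lia.
    set (l := powerRZ 2 k).
    assert (E1 : l * (IZR n - 1) = dyadic_point k (n - 1))
      by (unfold dyadic_point; rewrite minus_IZR; reflexivity).
    assert (E2 : dyadic_point k n = dyadic_point k (n - 1) + l)
      by (unfold dyadic_point, l; rewrite minus_IZR; ring).
    assert (E3 : l * (IZR n + 1) = dyadic_point k (n - 1) + l + l)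
      by (unfold dyadic_point, l; rewrite minus_IZR; ring).
    assert (E4 : dyadic_point k (n + 1) = dyadic_point k (n - 1) + l + l)
      by (unfold dyadic_point, l; rewrite plus_IZR, minus_IZR; ring).
    rewrite E1, E3, E4, E2.
    apply (scaled_mass_halves h K Hh I HI), powerRZ_lt; lra. }
  rewrite E. eapply Rle_trans; [| apply rpow_add_le; lra].
  apply rpow_le; [exact Hs|]. split; nra.
Qed.

Lemma dyadic_sum_le p L : 2 < p -> NoDup L ->
  sum_list (fun kn => rpow (scaled_mass h I (powerRZ 2 (fst kn) * (IZR (snd kn) - 1))
                                             (powerRZ 2 (fst kn) * (IZR (snd kn) + 1))) (p / q0)) L
  <= dyadic_constant p * rpow (mixed_mass h I (- (K + 1)) (K + 1)) (p / q0).
Proof.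
  intros Hp HN. set (s := p / q0).
  assert (Hs : 1 <= s) by (unfold s, q0; apply Rle_trans with (11 * p / 20); [lra | right; field]).
  set (f := fun kn : Z * Z => rpow (cell_scaled (fst kn) (snd kn)) s).
  set (shift := fun kn : Z * Z => (fst kn, (snd kn - 1)%Z)).
  assert (Hf : forall x, 0 <= f x) by (intros; apply rpow_ge0).
  destruct (list_in_dyadic_box L) as [K0 [Kmin [N [HN1 HB]]]].
  set (D := Z.to_nat (K0 - Kmin)).
  set (Mtot := mixed_mass h I (- (K + 1)) (K + 1)).
  assert (HMt : 0 <= Mtot)
    by (apply (mixed_mass_ge0 h K Hh I HI); destruct Hh as [_ [_ [HK _]]]; lra).
  assert (Hbox : sum_list f (dyadic_box K0 N D) <= weight_A halving_factor s (p / 2) * rpow Mtot s).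
  { rewrite sum_list_dyadic_box.
    apply (dyadic_tree_sum_le halving_factor s (p / 2) (/ theta) halving_factor_bounds Hs
             ltac:(lra) ltac:(apply Rinv_0_lt_compat, theta_bounds)
             ltac:(unfold s, theta; field; unfold q0; lra)
             cell_scaled cell_mixed K0 N cell_scaled_bounds
             ltac:(intros; right; apply cell_scaled_split) cell_mixed_superadditive D Mtot HMt).
    apply cell_mixed_root. }
  assert (Hincl : forall L', incl L' (map shift L ++ L) -> NoDup L' ->
            sum_list f L' <= sum_list f (dyadic_box K0 N D)).
  { intros L' HL' HN'. apply sum_list_incl; auto. intros [k m] Hin.
    apply HL', in_app_or in Hin. destruct Hin as [Hin|Hin].
    - apply in_map_iff in Hin. destruct Hin as [[k' n'] [E Hin]]. injection E as <- <-.
      destruct (HB k' n' Hin). apply in_dyadic_box; simpl; unfold D; lia.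
    - destruct (HB k m Hin). apply in_dyadic_box; unfold D; lia. }
  assert (S1 : sum_list f (map shift L) <= sum_list f (dyadic_box K0 N D)).
  { apply Hincl; [intros x Hx; apply in_or_app; auto|].
    apply Injective_map_NoDup; auto. intros [k1 n1] [k2 n2] E. injection E. intros. f_equal; lia. }
  assert (S2 : sum_list f L <= sum_list f (dyadic_box K0 N D)).
  { apply Hincl; [intros x Hx; apply in_or_app; auto | exact HN]. }
  eapply Rle_trans with (rpow 2 s * (sum_list f (map shift L) + sum_list f L)).
  - rewrite sum_list_map, <- sum_list_plus, <- sum_list_scal. apply sum_list_le.
    intros [k n] _. apply scaled_mass_double_le. lra.
  - assert (0 < rpow 2 s) by (apply rpow_gt0; lra).
    unfold dyadic_constant. fold s. fold Mtot. nra.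
Qed.

End DyadicCells.

(** * The norms of the statement *)

Definition sq_modulus (u v : R -> R -> R) (x y : R) : R := u x y ^ 2 + v x y ^ 2.

Lemma continuous2_of_smooth2 u : smooth2 u -> continuous2 u.
Proof. intros [D [<- HD]]. apply HD. Qed.

Lemma cs_density_sq_modulus u v : smooth2 u -> smooth2 v ->
  compact_support2 u -> compact_support2 v -> exists K, cs_density (sq_modulus u v) K.
Proof.
  intros su sv [Mu HMu] [Mv HMv].
  set (K := Rmax (Rmax Mu Mv) 0).
  assert (HK : 0 <= K /\ Mu <= K /\ Mv <= K).
  { assert (H1 := Rmax_l (Rmax Mu Mv) 0). assert (H2 := Rmax_r (Rmax Mu Mv) 0).
    assert (H3 := Rmax_l Mu Mv). assert (H4 := Rmax_r Mu Mv). unfold K; lra. }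
  exists K. split; [|split; [|split]].
  - apply (continuous2_comp2 u v (fun a b => a ^ 2 + b ^ 2));
      [apply continuous2_of_smooth2, su | apply continuous2_of_smooth2, sv |].
    intros a b eps He. apply sum_squares_continuous, He.
  - intros x y; unfold sq_modulus; nra.
  - apply HK.
  - intros x y Hxy. unfold sq_modulus. rewrite HMu, HMv; [ring | lra | lra].
Qed.

Lemma sqrt_rpow x a : 0 <= x -> rpow (sqrt x) a = rpow x (a / 2).
Proof.
  intros [Hx|<-]; [| rewrite sqrt_0, !rpow_0; reflexivity].
  rewrite <- (Rpower_sqrt x Hx), (rpow_pos (Rpower x (/ 2))), (rpow_pos x), Rpower_mult
    by (apply Rpower_gt0 || exact Hx).
  f_equal. field.
Qed.

Lemma rpow_cabs2_q0 u v x y : rpow (cabs2 u v x y) q0 = rpow (sq_modulus u v x y) theta.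
Proof. unfold cabs2. apply sqrt_rpow, Rplus_le_le_0_compat; apply pow2_ge_0. Qed.

Lemma rpow_cabs2_2 u v x y : rpow (cabs2 u v x y) 2 = sq_modulus u v x y.
Proof.
  assert (H : 0 <= sq_modulus u v x y)
    by (apply Rplus_le_le_0_compat; apply pow2_ge_0).
  unfold cabs2. rewrite sqrt_rpow by exact H. replace (2 / 2) with 1 by field.
  apply rpow_1, H.
Qed.

Lemma IntR_ind_segment c G al be : (forall y, continuity_pt G y) -> al <= be ->
  IntR (fun y => c * ind (fun y => al <= y <= be) y * G y) = c * RInt G al be.
Proof.
  intros HG Hab. set (F := fun y => c * ind (fun y => al <= y <= be) y * G y).
  set (M := Rabs al + Rabs be + 1).
  assert (Hal : - M < al)
    by (unfold M; rewrite <- Rabs_Ropp; assert (H := RRle_abs (- al));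
        assert (H' := Rabs_pos be); lra).
  assert (Hbe : be < M)
    by (unfold M; assert (H := RRle_abs be); assert (H' := Rabs_pos al); lra).
  assert (iF : forall a b, a <= b -> Riemann_integrable F a b).
  { intros a b Hab'.
    apply Riemann_integrable_ext with (fun y => c * (ind (fun y => al <= y <= be) y * G y));
      [intros; unfold F; ring|].
    apply Riemann_integrable_scal, Riemann_integrable_ind; auto.
    intros x y z Hx Hz Hxy Hyz; lra. }
  assert (pG : Riemann_integrable G al be) by (apply continuity_implies_RiemannInt; auto).
  rewrite (IntR_RInt_sym F M); [| lra | | exact iF].
  - rewrite <- (RInt_Chasles F (- M) be M (iF (- M) be ltac:(lra)) (iF be M ltac:(lra))),
      <- (RInt_Chasles F (- M) al be (iF (- M) al ltac:(lra)) (iF al be Hab)).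
    rewrite (RInt_null_inside F (- M) al), (RInt_null_inside F be M),
      (RInt_eq_inside F (fun y => c * G y) al be), RInt_scal; auto; try lra;
      try (intros x Hx; unfold F; rewrite ind_out; [ring | lra]).
    + apply Riemann_integrable_scal, pG.
    + intros x Hx; unfold F; rewrite ind_in; [ring | lra].
  - intros x Hx. unfold F. rewrite ind_out; [ring|].
    intros [H1 H2]. unfold Rabs in Hx; destruct (Rcase_abs x); lra.
Qed.

Section FrozenNorms.
Variables (u v : R -> R -> R) (K : R) (I : R -> Prop).
Hypotheses (Hh : cs_density (sq_modulus u v) K) (HI : is_interval I).

Lemma norm_IJ_dyad k n : norm_IJ u v I (dyad k n)
  = rpow (strip_mass (sq_modulus u v) I (powerRZ 2 k * (IZR n - 1))
                                        (powerRZ 2 k * (IZR n + 1))) (1 / q0).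
Proof.
  unfold norm_IJ, strip_mass, integral_on, slice_pow. do 2 f_equal.
  apply functional_extensionality; intros x.
  assert (Hk := powerRZ_lt 2 k ltac:(lra)).
  replace (fun y => ind I x * ind (dyad k n) y * rpow (cabs2 u v x y) q0)
    with (fun y => ind I x * ind (dyad k n) y * rpow (sq_modulus u v x y) theta)
    by (apply functional_extensionality; intros y; rewrite rpow_cabs2_q0; reflexivity).
  apply IntR_ind_segment; [| nra].
  intros y. apply (continuity_pt_section (fun x y => rpow (sq_modulus u v x y) theta)).
  apply (continuous2_pow _ _ Hh).
Qed.

Lemma norm_mixed_cs : norm_mixed u v I
  = rpow (mixed_mass (sq_modulus u v) I (- (K + 1)) (K + 1)) (1 / q0).
Proof.
  destruct Hh as [Hc [_ [HK Hs]]].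
  unfold norm_mixed, mixed_mass, integral_on. do 2 f_equal.
  apply functional_extensionality; intros x.
  replace (fun y => ind I x * rpow (cabs2 u v x y) 2) with (fun y => ind I x * sq_modulus u v x y)
    by (apply functional_extensionality; intros y; rewrite rpow_cabs2_2; reflexivity).
  assert (Hi : Riemann_integrable (fun y => sq_modulus u v x y) (- (K + 1)) (K + 1))
    by (apply Riemann_integrable_section, Hc).
  rewrite (IntR_RInt_sym _ (K + 1)), RInt_scal by
    (lra || exact Hi || (intros y Hy; rewrite Hs; [ring | right; lra])
     || (intros a b _; apply Riemann_integrable_scal, Riemann_integrable_section, Hc)).
  unfold ind. destruct (excluded_middle_informative (I x)).
  - rewrite !Rmult_1_l, rpow_mult by (apply (slice_ge0 _ _ Hh); lra).
    f_equal. unfold theta. field.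
  - rewrite !Rmult_0_l, !rpow_0. reflexivity.
Qed.

Lemma dyad_term_cs p k n : 0 < p -> dyad_term p u v I (k, n)
  = rpow (scaled_mass (sq_modulus u v) I (powerRZ 2 k * (IZR n - 1))
                                         (powerRZ 2 k * (IZR n + 1))) (p / q0).
Proof.
  intros Hp. unfold dyad_term, scaled_mass. simpl fst; simpl snd. rewrite norm_IJ_dyad.
  assert (Hk := powerRZ_lt 2 k ltac:(lra)).
  assert (He := strip_mass_ge0 _ _ Hh I HI (powerRZ 2 k * (IZR n - 1))
                                          (powerRZ 2 k * (IZR n + 1)) ltac:(nra)).
  replace (powerRZ 2 k * (IZR n + 1) - powerRZ 2 k * (IZR n - 1)) with (dyad_len k)
    by (unfold dyad_len; ring).
  assert (0 < dyad_len k) by (unfold dyad_len; lra).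
  rewrite rpow_mul, !rpow_mult by (lra || apply rpow_ge0 || exact He).
  (* |J|^(-p/20) = (|J|^(theta - 1))^(p/q0) *)
  f_equal; f_equal; unfold theta, q0; field.
Qed.

End FrozenNorms.

Theorem mainTheorem9 :
  forall p : R, 2 < p ->
  exists C : R, 0 < C /\
    forall (I : R -> Prop) (u v : R -> R -> R),
      is_interval I ->
      smooth2 u -> smooth2 v -> compact_support2 u -> compact_support2 v ->
      forall L : list (Z * Z), NoDup L ->
        fold_right Rplus 0 (map (dyad_term p u v I) L)
          <= C * rpow (norm_mixed u v I) p.
Proof.
  intros p Hp. exists (dyadic_constant p). split; [apply dyadic_constant_pos, Hp|].
  intros I u v HI su sv cu cv L HN.
  destruct (cs_density_sq_modulus u v su sv cu cv) as [K Hh].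
  rewrite (norm_mixed_cs u v K I Hh), rpow_mult
    by (apply (mixed_mass_ge0 _ _ Hh I HI); destruct Hh as [_ [_ [HK _]]]; lra).
  replace (1 / q0 * p) with (p / q0) by (field; unfold q0; lra).
  change (fold_right Rplus 0 (map (dyad_term p u v I) L)) with (sum_list (dyad_term p u v I) L).
  eapply Rle_trans; [| apply (dyadic_sum_le _ K I Hh HI p L Hp HN)].
  right. apply sum_list_ext. intros [k n]. apply (dyad_term_cs u v K I Hh HI). lra.
Qed.
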